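(* Let $\alpha\in(0,1)$ and $F\in C^\infty(\mathbb{S}^1_{2\pi}\times(0,\infty))$. Let $(X,\nu)\in C([0,\infty);C^1(\mathbb{S}^1_{2\pi};\mathbb{R}^2\times\mathbb{S}^1))\cap C^\infty(\mathbb{S}^1_{2\pi}\times(0,\infty);\mathbb{R}^2\times\mathbb{S}^1)$ be an inverse curvature flow starting from $(X_0,\nu_0)\in C^{1+\alpha}(\mathbb{S}^1_{2\pi};\mathbb{R}^2\times\mathbb{S}^1)$, with $(X_0,\nu_0)$ $\ell$-convex, whose tangent velocity satisfies $T=\partial_u\beta/\ell^2 + F\beta$ on $\mathbb{S}^1_{2\pi}\times(0,\infty)$. Then there exist $n\in\mathbb{N}$ and $\phi\in C([0,\infty);C^1(\mathbb{S}^1_{2\pi};\mathbb{S}^1_{2\pi}))\cap C^\infty(\mathbb{S}^1_{2\pi}\times(0,\infty);\mathbb{S}^1_{2\pi})$ with $\phi(\cdot,0)=\phi_0$ a $C^1$-diffeomorphism belonging to $C^{1+\alpha}$, such that $\phi(\cdot,t)$ is a diffeomorphism of $\mathbb{S}^1_{2\pi}$ for every $t\ge0$ and the reparametrized flow $(\tilde X(u,t),\tilde\nu(u,t)) := (X(\phi(u,t),t),\nu(\phi(u,t),t))$ satisfies $$\tilde\nu(u,0)=(\sin(nu),-\cos(nu))^\top\ (u\in\mathbb{S}^1_{2\pi}),\qquad \partial_t\tilde X = \frac{\tilde\beta}{\tilde\ell}\tilde\nu + \frac{\partial_u\tilde\beta}{\tilde\ell^2}\tilde\mu\ \text{ on }\mathbb{S}^1_{2\pi}\times(0,\infty),$$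 where $\tilde\mu=J\tilde\nu$ and $(\tilde\ell,\tilde\beta)$ is the Legendre curvature of $(\tilde X,\tilde\nu)$.
   Context: $\mathbb{S}^1_{2\pi}=\mathbb{R}/2\pi\mathbb{Z}$, $\mathbb{S}^1$ the unit circle, $J$ anticlockwise rotation by $\pi/2$. A Legendre curve is a $C^1$ pair $(X,\nu):\mathbb{S}^1_{2\pi}\to\mathbb{R}^2\times\mathbb{S}^1$ with $\langle\partial_uX,\nu\rangle=0$; $\mu=J\nu$; Legendre curvature $\ell=\langle\partial_u\nu,\mu\rangle$, $\beta=\langle\partial_uX,\mu\rangle$; $\ell$-convex means $\ell>0$. A flow of Legendre curves has time slices that are Legendre curves; normal velocity $N=\langle\partial_tX,\nu\rangle$, tangent velocity $T=\langle\partial_tX,\mu\rangle$. An inverse curvature flow is a flow of Legendre curves, smooth for $t>0$, whose slices are $\ell$-convex for $t>0$ and with $N=\beta/\ell$ for $t>0$. *)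

From Stdlib Require Import Reals List.
From Coquelicot Require Import Coquelicot.
Open Scope R_scope.

(* Points of R^2 are pairs; the circle S^1_{2pi} = R/2piZ is represented by
   2pi-periodic functions of u : R.  Functions of (u,t) have type R -> R -> _. *)

Definition dot (a b : R * R) : R := fst a * fst b + snd a * snd b.
Definition vadd (a b : R * R) : R * R := (fst a + fst b, snd a + snd b).
Definition vscal (c : R) (a : R * R) : R * R := (c * fst a, c * snd a).
Definition Jrot (a : R * R) : R * R := (- snd a, fst a).

Definition du (f : R -> R -> R * R) (u t : R) : R * R :=
  (Derive (fun s => fst (f s t)) u, Derive (fun s => snd (f s t)) u).
Definition dt (f : R -> R -> R * R) (u t : R) : R * R :=
  (Derive (fun s => fst (f u s)) t, Derive (fun s => snd (f u s)) t).

Definition ell (X nu : R -> R -> R * R) (u t : R) : R :=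
  dot (du nu u t) (Jrot (nu u t)).
Definition beta (X nu : R -> R -> R * R) (u t : R) : R :=
  dot (du X u t) (Jrot (nu u t)).
Definition normal_vel (X nu : R -> R -> R * R) (u t : R) : R :=
  dot (dt X u t) (nu u t).
Definition tang_vel (X nu : R -> R -> R * R) (u t : R) : R :=
  dot (dt X u t) (Jrot (nu u t)).

Definition C1 (f : R -> R) : Prop :=
  (forall u, ex_derive f u) /\ (forall u, continuous (Derive f) u).

Definition C1alpha (alpha : R) (f : R -> R) : Prop :=
  C1 f /\ exists C : R, forall u v, u <> v ->
    Rabs (Derive f u - Derive f v) <= C * Rpower (Rabs (u - v)) alpha.

(* f in C([0,oo); C^1(S^1)) : every slice is C^1 and t |-> f(.,t) is
   continuous for the C^1 (sup) norm *)
Definition C0_C1 (f : R -> R -> R) : Prop :=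
  (forall t, 0 <= t -> C1 (fun u => f u t)) /\
  forall t0, 0 <= t0 -> forall eps, 0 < eps -> exists delta, 0 < delta /\
    forall t, 0 <= t -> Rabs (t - t0) < delta -> forall u,
      Rabs (f u t - f u t0) < eps /\
      Rabs (Derive (fun s => f s t) u - Derive (fun s => f s t0) u) < eps.

(* iterated partial derivatives: true = d/du, false = d/dt *)
Fixpoint dpart (l : list bool) (f : R -> R -> R) : R -> R -> R :=
  match l with
  | nil => f
  | b :: l' =>
      if b then fun u t => Derive (fun s => dpart l' f s t) u
      else fun u t => Derive (fun s => dpart l' f u s) t
  end.

Definition smooth_pos (f : R -> R -> R) : Prop :=
  forall (l : list bool) (u t : R), 0 < t ->
    ex_derive (fun s => dpart l f s t) u /\
    ex_derive (fun s => dpart l f u s) t /\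
    continuous (fun p : R * R => dpart l f (fst p) (snd p)) (u, t).

Definition periodic2 (f : R -> R -> R) : Prop :=
  forall u t, f (u + 2 * PI) t = f u t.

Definition C0_C1V (f : R -> R -> R * R) : Prop :=
  C0_C1 (fun u t => fst (f u t)) /\ C0_C1 (fun u t => snd (f u t)).
Definition smooth_posV (f : R -> R -> R * R) : Prop :=
  smooth_pos (fun u t => fst (f u t)) /\ smooth_pos (fun u t => snd (f u t)).
Definition C1alphaV (alpha : R) (f : R -> R * R) : Prop :=
  C1alpha alpha (fun u => fst (f u)) /\ C1alpha alpha (fun u => snd (f u)).
Definition periodic2V (f : R -> R -> R * R) : Prop :=
  forall u t, 0 <= t -> f (u + 2 * PI) t = f u t.

Definition flow_regular (X nu : R -> R -> R * R) : Prop :=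
  periodic2V X /\ periodic2V nu /\
  C0_C1V X /\ C0_C1V nu /\ smooth_posV X /\ smooth_posV nu.

Definition legendre_flow (X nu : R -> R -> R * R) : Prop :=
  forall u t, 0 <= t ->
    dot (nu u t) (nu u t) = 1 /\ dot (du X u t) (nu u t) = 0.

Definition inverse_curvature_flow (X nu : R -> R -> R * R) : Prop :=
  legendre_flow X nu /\
  (forall u t, 0 < t -> 0 < ell X nu u t) /\
  (forall u t, 0 < t -> normal_vel X nu u t = beta X nu u t / ell X nu u t).

From Pilot Require Import Defs.
From Stdlib Require Import Reals List.
From Coquelicot Require Import Coquelicot.
From Stdlib Require Import Lra Psatz ZArith FunctionalExtensionality ClassicalEpsilon.
Open Scope R_scope.

(* Since [nu] is a unit vector and [ell > 0], [nu x t = (sin theta, - cos theta)]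
   for an angle [theta x t] with [Du theta = ell]; [theta] is continuous in [t] up
   to [t = 0] because [nu] is continuous in C^1, and [theta (x + 2 PI) t - theta x t]
   lies in [2 PI Z], so it is a constant [2 PI n] with [n > 0], the degree of [nu].
   Define [phi . t] as the inverse of [theta . t / n]: then
   [nu (phi u t) t = (sin (n u), - cos (n u))] for all [t], and the implicit
   function theorem gives [Du phi = n / ell (phi)] (whence the C^1 and C^{1+alpha}
   regularity) and [Dt phi = - omega / ell (phi)], [omega] being the angular speed
   of [nu] in time; smoothness follows by iterating these formulas.  For the new
   flow [ell = n] and the normal does not move, and the time derivative of the
   Legendre condition together with the space derivative of [N = beta / ell] gives
   [beta omega = T ell - Du (beta / ell)], which says exactly that the new
   tangential velocity is [Du beta / ell^2]. *)

(** * Smooth functions on R x (0, oo) *)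

Definition Du (f : R -> R -> R) u t := Derive (fun s => f s t) u.
Definition Dt (f : R -> R -> R) u t := Derive (fun s => f u s) t.
Definition continuous2 (f : R -> R -> R) u t :=
  continuous (fun p : R * R => f (fst p) (snd p)) (u, t).

Definition agree_pos (f g : R -> R -> R) := forall u t, 0 < t -> f u t = g u t.

Lemma locally_gt0 t : 0 < t -> locally t (fun s => 0 < s).
Proof.
  intros ht. exists (mkposreal t ht). intros s Hs.
  apply Rabs_lt_between' in Hs. simpl in Hs. lra.
Qed.

Lemma locally2_snd_gt0 u t : 0 < t -> locally (u, t) (fun p : R * R => 0 < snd p).
Proof.
  intros ht. exists (mkposreal t ht). intros [a b] [_ Hb]. simpl in *.
  apply Rabs_lt_between' in Hb. lra.
Qed.

Lemma Du_agree f g : agree_pos f g -> agree_pos (Du f) (Du g).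
Proof. intros E u t ht. apply Derive_ext. intros; apply E; auto. Qed.

Lemma Dt_agree f g : agree_pos f g -> agree_pos (Dt f) (Dt g).
Proof.
  intros E u t ht. apply Derive_ext_loc.
  apply (filter_imp _ _ (fun s hs => E u s hs)). apply locally_gt0, ht.
Qed.

Lemma regular_agree f g u t : agree_pos f g -> 0 < t ->
  ex_derive (fun s => f s t) u /\ ex_derive (fun s => f u s) t /\ continuous2 f u t ->
  ex_derive (fun s => g s t) u /\ ex_derive (fun s => g u s) t /\ continuous2 g u t.
Proof.
  intros E ht [A [B C]]. split; [|split].
  - apply (ex_derive_ext (fun s => f s t)); [|exact A]. intros; apply E, ht.
  - apply (ex_derive_ext_loc (fun s => f u s)); [|exact B].
    apply (filter_imp _ _ (fun s hs => E u s hs)). apply locally_gt0, ht.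
  - apply (continuous_ext_loc _ (fun p : R * R => f (fst p) (snd p))); [|exact C].
    apply (filter_imp _ _ (fun p hp => E (fst p) (snd p) hp)).
    apply locally2_snd_gt0, ht.
Qed.

Lemma dpart_app l l0 f : dpart l (dpart l0 f) = dpart (l ++ l0) f.
Proof. induction l as [|b l IH]; simpl; auto. rewrite IH. auto. Qed.

Lemma smooth_pos_coind (Q : (R -> R -> R) -> Prop) :
  (forall h, Q h -> forall u t, 0 < t ->
     ex_derive (fun s => h s t) u /\ ex_derive (fun s => h u s) t /\ continuous2 h u t) ->
  (forall h, Q h -> exists g, Q g /\ agree_pos g (Du h)) ->
  (forall h, Q h -> exists g, Q g /\ agree_pos g (Dt h)) ->
  forall f g, Q f -> agree_pos f g -> smooth_pos g.
Proof.
  intros Hreg HDu HDt f g Qf Efg l u t ht.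
  assert (Hl : exists h, Q h /\ agree_pos h (dpart l g)).
  { induction l as [|[|] l [h [Qh Eh]]]; simpl.
    - exists f; auto.
    - destruct (HDu h Qh) as [h' [Qh' Eh']]. exists h'. split; auto.
      intros a b hb. rewrite Eh' by auto. apply (Du_agree _ _ Eh); auto.
    - destruct (HDt h Qh) as [h' [Qh' Eh']]. exists h'. split; auto.
      intros a b hb. rewrite Eh' by auto. apply (Dt_agree _ _ Eh); auto. }
  destruct Hl as [h [Qh Eh]]. apply (regular_agree h); auto.
Qed.

Lemma smooth_pos_dpart l0 f : smooth_pos f -> smooth_pos (dpart l0 f).
Proof. intros Hf l u t ht. rewrite dpart_app. apply Hf; auto. Qed.

Lemma smooth_pos_Du f : smooth_pos f -> smooth_pos (Du f).
Proof. apply (smooth_pos_dpart (true :: nil)). Qed.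

Lemma smooth_pos_Dt f : smooth_pos f -> smooth_pos (Dt f).
Proof. apply (smooth_pos_dpart (false :: nil)). Qed.

Lemma smooth_pos_regular f u t : smooth_pos f -> 0 < t ->
  ex_derive (fun s => f s t) u /\ ex_derive (fun s => f u s) t /\ continuous2 f u t.
Proof. intros Hf ht. apply (Hf nil u t ht). Qed.

Lemma smooth_pos_ext f g : smooth_pos f -> agree_pos f g -> smooth_pos g.
Proof.
  apply (smooth_pos_coind smooth_pos).
  - intros h Hh u t ht. apply smooth_pos_regular; auto.
  - intros h Hh. exists (Du h). split; [apply smooth_pos_Du|]; auto. intros ? ? ?; auto.
  - intros h Hh. exists (Dt h). split; [apply smooth_pos_Dt|]; auto. intros ? ? ?; auto.
Qed.

Lemma continuous2_plus f g u t : continuous2 f u t -> continuous2 g u t ->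
  continuous2 (fun a b => f a b + g a b) u t.
Proof. apply (continuous_plus (fun p : R * R => f (fst p) (snd p))). Qed.

Lemma continuous2_mult f g u t : continuous2 f u t -> continuous2 g u t ->
  continuous2 (fun a b => f a b * g a b) u t.
Proof. apply (continuous_mult (fun p : R * R => f (fst p) (snd p))). Qed.

Lemma continuous2_t f u t : continuous2 f u t -> continuous (fun s => f u s) t.
Proof.
  apply (continuous_comp_2 (fun _ : R => u) (fun s : R => s) f t).
  - apply continuous_const.
  - apply continuous_id.
Qed.

(* Rational expressions in smooth functions.  [smooth_pos_coind] needs a class
   closed under [Du] and [Dt]; products of smooth functions are not (their
   derivatives are sums of products), but expression trees are. *)
Inductive rexpr :=
  | RAtom (f : R -> R -> R) | RConst (c : R)
  | RAdd (a b : rexpr) | RMul (a b : rexpr) | RInv (a : rexpr).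

Fixpoint reval (e : rexpr) : R -> R -> R :=
  match e with
  | RAtom f => f
  | RConst c => fun _ _ => c
  | RAdd a b => fun u t => reval a u t + reval b u t
  | RMul a b => fun u t => reval a u t * reval b u t
  | RInv a => fun u t => / reval a u t
  end.

Fixpoint rexpr_deriv (D : (R -> R -> R) -> R -> R -> R) (e : rexpr) : rexpr :=
  match e with
  | RAtom f => RAtom (D f)
  | RConst _ => RConst 0
  | RAdd a b => RAdd (rexpr_deriv D a) (rexpr_deriv D b)
  | RMul a b => RAdd (RMul (rexpr_deriv D a) b) (RMul a (rexpr_deriv D b))
  | RInv a => RMul (RConst (-1)) (RMul (rexpr_deriv D a) (RMul (RInv a) (RInv a)))
  end.

Fixpoint rexpr_smooth (e : rexpr) : Prop :=
  match e with
  | RAtom f => smooth_pos f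
  | RConst _ => True
  | RAdd a b | RMul a b => rexpr_smooth a /\ rexpr_smooth b
  | RInv a => rexpr_smooth a /\ forall u t, 0 < t -> reval a u t <> 0
  end.

Lemma rexpr_smooth_deriv D e : (forall f, smooth_pos f -> smooth_pos (D f)) ->
  rexpr_smooth e -> rexpr_smooth (rexpr_deriv D e).
Proof. intros HD. induction e; simpl; intuition. Qed.

Lemma reval_derive e u t : rexpr_smooth e -> 0 < t ->
  is_derive (fun s => reval e s t) u (reval (rexpr_deriv Du e) u t) /\
  is_derive (fun s => reval e u s) t (reval (rexpr_deriv Dt e) u t) /\
  continuous2 (reval e) u t.
Proof.
  revert u t.
  induction e as [f|c|a IHa b IHb|a IHa b IHb|a IHa]; simpl; intros u t Hs ht.
  - destruct (smooth_pos_regular f u t Hs ht) as [A [B C]].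
    split; [|split]; auto; apply Derive_correct; auto.
  - split; [|split]; try apply continuous_const;
      apply (is_derive_const (K := R_AbsRing) (V := R_NormedModule)).
  - destruct Hs as [Ha Hb].
    destruct (IHa u t Ha ht) as [A1 [B1 C1]], (IHb u t Hb ht) as [A2 [B2 C2]].
    split; [|split].
    + apply (is_derive_plus (fun s => reval a s t) (fun s => reval b s t)); auto.
    + apply (is_derive_plus (fun s => reval a u s) (fun s => reval b u s)); auto.
    + apply continuous2_plus; auto.
  - destruct Hs as [Ha Hb].
    destruct (IHa u t Ha ht) as [A1 [B1 C1]], (IHb u t Hb ht) as [A2 [B2 C2]].
    split; [|split].
    + apply (is_derive_mult (fun s => reval a s t) (fun s => reval b s t)); auto using Rmult_comm.
    + apply (is_derive_mult (fun s => reval a u s) (fun s => reval b u s)); auto using Rmult_comm.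
    + apply continuous2_mult; auto.
  - destruct Hs as [Ha Hnz]. specialize (Hnz u t ht).
    destruct (IHa u t Ha ht) as [A1 [B1 C1]].
    split; [|split].
    + replace (-1 * _) with (- reval (rexpr_deriv Du a) u t / reval a u t ^ 2) by (field; auto).
      apply (is_derive_inv (fun s => reval a s t)); auto.
    + replace (-1 * _) with (- reval (rexpr_deriv Dt a) u t / reval a u t ^ 2) by (field; auto).
      apply (is_derive_inv (fun s => reval a u s)); auto.
    + apply (continuous_comp (fun p : R * R => reval a (fst p) (snd p)) Rinv); auto.
      apply continuous_Rinv; auto.
Qed.

Lemma smooth_pos_reval e : rexpr_smooth e -> smooth_pos (reval e).
Proof.
  intros He.
  apply (smooth_pos_coind (fun h => exists e, rexpr_smooth e /\ h = reval e)) with (f := reval e);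
    [| | |exists e; auto|intros ? ? ?; reflexivity].
  - intros h [e' [He' ->]] u t ht. destruct (reval_derive e' u t He' ht) as [A [B C]].
    split; [|split]; [eexists; exact A|eexists; exact B|exact C].
  - intros h [e' [He' ->]]. exists (reval (rexpr_deriv Du e')). split.
    + exists (rexpr_deriv Du e'). split; auto. apply rexpr_smooth_deriv; auto using smooth_pos_Du.
    + intros u t ht. symmetry. apply is_derive_unique, (reval_derive e' u t He' ht).
  - intros h [e' [He' ->]]. exists (reval (rexpr_deriv Dt e')). split.
    + exists (rexpr_deriv Dt e'). split; auto. apply rexpr_smooth_deriv; auto using smooth_pos_Dt.
    + intros u t ht. symmetry. apply is_derive_unique, (reval_derive e' u t He' ht).
Qed.

Lemma continuity_pt_of_ex_derive (g : R -> R) x : ex_derive g x -> continuity_pt g x.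
Proof.
  intros H. apply continuity_pt_filterlim.
  apply (ex_derive_continuous (K := R_AbsRing) (V := R_NormedModule)); auto.
Qed.

Lemma mean_value_2d f u t a b : smooth_pos f -> 0 < t -> 0 < b ->
  exists c c', Rabs (c - u) <= Rabs (a - u) /\ Rabs (c' - t) <= Rabs (b - t) /\
    f a b - f u t = Du f c b * (a - u) + Dt f u c' * (b - t).
Proof.
  intros Hf ht hb.
  destruct (MVT_gen (fun s => f s b) u a (fun s => Du f s b)) as [c [Hc Ec]].
  { intros x _. apply Derive_correct, (smooth_pos_regular f x b Hf hb). }
  { intros x _. apply continuity_pt_of_ex_derive, (smooth_pos_regular f x b Hf hb). }
  assert (Hpos : forall x, Rmin t b <= x <= Rmax t b -> 0 < x).
  { intros x [Hx _]. unfold Rmin in Hx. destruct (Rle_dec t b); lra. }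
  destruct (MVT_gen (fun s => f u s) t b (Dt f u)) as [c' [Hc' Ec']].
  { intros x Hx. apply Derive_correct, (smooth_pos_regular f u x Hf (Hpos x ltac:(lra))). }
  { intros x Hx. apply continuity_pt_of_ex_derive, (smooth_pos_regular f u x Hf (Hpos x Hx)). }
  exists c, c'. split; [|split].
  - unfold Rmin, Rmax in Hc. destruct (Rle_dec u a); unfold Rabs;
      destruct (Rcase_abs (c - u)), (Rcase_abs (a - u)); lra.
  - unfold Rmin, Rmax in Hc'. destruct (Rle_dec t b); unfold Rabs;
      destruct (Rcase_abs (c' - t)), (Rcase_abs (b - t)); lra.
  - simpl in Ec, Ec'. replace (f a b - f u t) with ((f a b - f u b) + (f u b - f u t)) by ring.
    rewrite Ec, Ec'. ring.
Qed.

Lemma smooth_pos_differentiable f u t : smooth_pos f -> 0 < t ->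
  differentiable_pt_lim f u t (Du f u t) (Dt f u t).
Proof.
  intros Hf ht eps.
  assert (He2 : 0 < eps / 2) by (destruct eps; simpl; lra).
  assert (Cu := proj2 (continuity_2d_pt_filterlim _ _ _) (proj2 (proj2 (Hf (true :: nil) u t ht)))).
  assert (Ct := proj2 (continuity_2d_pt_filterlim _ _ _) (proj2 (proj2 (Hf (false :: nil) u t ht)))).
  destruct (Cu (mkposreal _ He2)) as [d1 H1], (Ct (mkposreal _ He2)) as [d2 H2].
  simpl in H1, H2.
  assert (Hd : 0 < Rmin (Rmin d1 d2) t) by (repeat apply Rmin_pos; auto; apply cond_pos).
  exists (mkposreal _ Hd). intros a b Ha Hb. simpl in Ha, Hb.
  assert (Hmin := Rmin_l (Rmin d1 d2) t). assert (Hmin' := Rmin_r (Rmin d1 d2) t).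
  assert (Hd1 := Rmin_l d1 d2). assert (Hd2 := Rmin_r d1 d2).
  assert (hb : 0 < b) by (apply Rabs_lt_between' in Hb; lra).
  destruct (mean_value_2d f u t a b Hf ht hb) as [c [c' [Hc [Hc' ->]]]].
  assert (Ec : Rabs (Du f c b - Du f u t) < eps / 2) by (apply H1; lra).
  assert (Ec' : Rabs (Dt f u c' - Dt f u t) < eps / 2).
  { apply H2; [rewrite Rminus_eq_0, Rabs_R0|]; lra. }
  replace (Du f c b * (a - u) + Dt f u c' * (b - t) - (Du f u t * (a - u) + Dt f u t * (b - t)))
    with ((Du f c b - Du f u t) * (a - u) + (Dt f u c' - Dt f u t) * (b - t)) by ring.
  eapply Rle_trans; [apply Rabs_triang|]. rewrite !Rabs_mult.
  assert (Mu := Rmax_l (Rabs (a - u)) (Rabs (b - t))).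
  assert (Mt := Rmax_r (Rabs (a - u)) (Rabs (b - t))).
  assert (Pu := Rabs_pos (a - u)). assert (Pt := Rabs_pos (b - t)).
  assert (P1 := Rabs_pos (Du f c b - Du f u t)). assert (P2 := Rabs_pos (Dt f u c' - Dt f u t)).
  nra.
Qed.

Lemma smooth_pos_Du_Dt f x t : smooth_pos f -> 0 < t -> Du (Dt f) x t = Dt (Du f) x t.
Proof.
  intros H ht. unfold Du, Dt. apply Schwarz.
  - exists (mkposreal t ht). intros a b _ Hb. simpl in Hb.
    assert (hb : 0 < b) by (apply Rabs_lt_between' in Hb; lra).
    destruct (H nil a b hb) as [A1 [A2 _]], (H (false :: nil) a b hb) as [B1 _],
      (H (true :: nil) a b hb) as [_ [C2 _]].
    repeat split; auto.
  - apply continuity_2d_pt_filterlim, (H (true :: false :: nil) x t ht).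
  - apply continuity_2d_pt_filterlim, (H (false :: true :: nil) x t ht).
Qed.

(** * Elementary real analysis *)

Lemma decompose_2PI x : exists (k : Z) y, x = y + 2 * PI * IZR k /\ 0 <= y < 2 * PI.
Proof.
  assert (HP : 0 < 2 * PI) by (generalize PI_RGT_0; lra).
  destruct (archimed (x / (2 * PI))) as [H1 H2].
  exists (up (x / (2 * PI)) - 1)%Z, (x - 2 * PI * IZR (up (x / (2 * PI)) - 1)).
  split; [ring|]. rewrite minus_IZR.
  set (k := IZR (up (x / (2 * PI)))) in *.
  assert (x = 2 * PI * (x / (2 * PI))) by (field; lra).
  split; nra.
Qed.

Lemma periodic_shift_Z (g : R -> R) (p : R) : (forall z, g (z + p) = g z) ->
  forall (k : Z) y, g (y + p * IZR k) = g y.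
Proof.
  intros Hg.
  assert (Hn : forall (m : nat) y, g (y + p * INR m) = g y).
  { induction m; intros y.
    - simpl. rewrite Rmult_0_r, Rplus_0_r; auto.
    - rewrite S_INR. replace (y + p * (INR m + 1)) with ((y + p * INR m) + p) by ring.
      rewrite Hg; auto. }
  intros [|q|q] y.
  - simpl. rewrite Rmult_0_r, Rplus_0_r; auto.
  - rewrite <- positive_nat_Z, <- INR_IZR_INZ. apply Hn.
  - rewrite <- Pos2Z.opp_pos, opp_IZR, <- positive_nat_Z, <- INR_IZR_INZ.
    rewrite <- (Hn (Pos.to_nat q) (y + p * - INR (Pos.to_nat q))). f_equal. ring.
Qed.

Lemma periodic_2PI_reduce (g : R -> R) : (forall z, g (z + 2 * PI) = g z) ->
  forall x, exists y, 0 <= y <= 2 * PI /\ g x = g y.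
Proof.
  intros Hg x. destruct (decompose_2PI x) as [k [y [-> Hy]]].
  exists y. split; [lra|]. apply periodic_shift_Z; auto.
Qed.

Lemma sin_2PI_periodic z : sin (z + 2 * PI) = sin z.
Proof. rewrite sin_plus, sin_2PI, cos_2PI. ring. Qed.

Lemma cos_2PI_periodic z : cos (z + 2 * PI) = cos z.
Proof. rewrite cos_plus, sin_2PI, cos_2PI. ring. Qed.

Lemma sin_cos_inj_mod_2PI a b : sin a = sin b -> cos a = cos b ->
  exists k : Z, a = b + 2 * PI * IZR k.
Proof.
  intros Hs Hc.
  destruct (decompose_2PI (a - b)) as [k [y [E Hy]]].
  assert (Hsy : sin y = 0).
  { rewrite <- (periodic_shift_Z sin _ sin_2PI_periodic k), <- E, sin_minus, Hs, Hc. ring. }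
  assert (Hcy : cos y = 1).
  { rewrite <- (periodic_shift_Z cos _ cos_2PI_periodic k), <- E, cos_minus, Hs, Hc.
    rewrite Rplus_comm, <- (sin2_cos2 b). unfold Rsqr. ring. }
  destruct (sin_eq_0_0 y Hsy) as [j ->].
  assert (HP := PI_RGT_0).
  assert (j = 0%Z \/ j = 1%Z) as [->| ->].
  { assert (0 <= IZR j) by (apply Rmult_le_reg_r with PI; lra).
    assert (IZR j < 2) by (apply Rmult_lt_reg_r with PI; lra).
    apply le_IZR in H. apply lt_IZR in H0. lia. }
  - exists k. simpl in E. lra.
  - simpl in Hcy. rewrite Rmult_1_l, cos_PI in Hcy. lra.
Qed.

Lemma unit_vector_angle a b : a * a + b * b = 1 -> exists th, sin th = a /\ - cos th = b.
Proof.
  intros H.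
  assert (Ha : -1 <= a <= 1) by (split; nra).
  assert (Hc : cos (asin a) = Rabs b).
  { rewrite cos_asin; auto. rewrite <- sqrt_Rsqr_abs. f_equal. unfold Rsqr. lra. }
  destruct (Rle_dec b 0).
  - exists (asin a). split; [apply sin_asin; auto|]. rewrite Hc, Rabs_left1; lra.
  - exists (PI - asin a). split; [rewrite sin_PI_x; apply sin_asin; auto|].
    rewrite Rtrigo_facts.cos_pi_minus, Hc, Rabs_right; lra.
Qed.

Lemma const_of_derive_0 (f : R -> R) x y :
  (forall s, Rmin x y <= s <= Rmax x y -> is_derive f s 0) -> f x = f y.
Proof.
  intros H. destruct (MVT_gen f y x (fun _ => 0)) as [c [_ E]].
  - intros s Hs. apply H. rewrite Rmin_comm, Rmax_comm. lra.
  - intros s Hs. apply continuity_pt_of_ex_derive. eexists; apply H.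
    rewrite Rmin_comm, Rmax_comm. auto.
  - lra.
Qed.

(* The coordinates of [(a, b)] in the rotating frame [(sin c, - cos c), (cos c, sin c)]
   are constant. *)
Lemma angle_lift_propagate (a b c w : R -> R) x y :
  (forall s, Rmin x y <= s <= Rmax x y ->
     is_derive a s (- w s * b s) /\ is_derive b s (w s * a s) /\ is_derive c s (w s)) ->
  a y = sin (c y) -> b y = - cos (c y) -> a x = sin (c x) /\ b x = - cos (c x).
Proof.
  intros H Ay By.
  assert (E1 : a x * sin (c x) - b x * cos (c x) = a y * sin (c y) - b y * cos (c y)).
  { apply (const_of_derive_0 (fun s => a s * sin (c s) - b s * cos (c s))).
    intros s Hs. destruct (H s Hs) as [Ha [Hb Hc]].
    auto_derive; [repeat split; eexists; eauto|].
    erewrite (is_derive_unique (fun s => a s)), (is_derive_unique (fun s => b s)),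
      (is_derive_unique (fun s => c s)) by eassumption.
    ring. }
  assert (E2 : a x * cos (c x) + b x * sin (c x) = a y * cos (c y) + b y * sin (c y)).
  { apply (const_of_derive_0 (fun s => a s * cos (c s) + b s * sin (c s))).
    intros s Hs. destruct (H s Hs) as [Ha [Hb Hc]].
    auto_derive; [repeat split; eexists; eauto|].
    erewrite (is_derive_unique (fun s => a s)), (is_derive_unique (fun s => b s)),
      (is_derive_unique (fun s => c s)) by eassumption.
    ring. }
  rewrite Ay, By in E1, E2.
  assert (S1 := sin2_cos2 (c y)). assert (S2 := sin2_cos2 (c x)). unfold Rsqr in S1, S2.
  set (p := a x * sin (c x) - b x * cos (c x)) in E1.
  set (q := a x * cos (c x) + b x * sin (c x)) in E2.
  assert (Hp : p = 1) by nra. assert (Hq : q = 0) by nra.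
  split.
  - replace (a x) with (sin (c x) * p + cos (c x) * q); [rewrite Hp, Hq; ring|].
    transitivity (a x * (sin (c x) * sin (c x) + cos (c x) * cos (c x))); [unfold p, q; ring|].
    rewrite S2; ring.
  - replace (b x) with (- cos (c x) * p + sin (c x) * q); [rewrite Hp, Hq; ring|].
    transitivity (b x * (sin (c x) * sin (c x) + cos (c x) * cos (c x))); [unfold p, q; ring|].
    rewrite S2; ring.
Qed.

Lemma unit_circle_derive_orth (a b : R -> R) x da db :
  locally x (fun s => a s * a s + b s * b s = 1) -> is_derive a x da -> is_derive b x db ->
  da * a x + db * b x = 0.
Proof.
  intros Hl Ha Hb.
  assert (H : is_derive (fun s => a s * a s + b s * b s) x
                (da * a x + a x * da + (db * b x + b x * db))).
  { apply (is_derive_plus (fun s => a s * a s) (fun s => b s * b s));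
      [apply (is_derive_mult a a)|apply (is_derive_mult b b)]; auto using Rmult_comm. }
  assert (H0 : is_derive (fun s => a s * a s + b s * b s) x 0).
  { apply is_derive_ext_loc with (fun _ => 1).
    - apply (filter_imp _ _ (fun s E => eq_sym E) Hl).
    - apply (is_derive_const (K := R_AbsRing) (V := R_NormedModule)). }
  assert (U := is_derive_unique _ _ _ H). rewrite (is_derive_unique _ _ _ H0) in U. lra.
Qed.

Lemma unit_frame_decomp a b da db : a * a + b * b = 1 ->
  da = (da * a + db * b) * a - (da * - b + db * a) * b /\
  db = (da * a + db * b) * b + (da * - b + db * a) * a.
Proof.
  intros H. split.
  - transitivity (da * (a * a + b * b)); [rewrite H|]; ring.
  - transitivity (db * (a * a + b * b)); [rewrite H|]; ring.
Qed.

Lemma unit_orth_decomp a b da db : a * a + b * b = 1 -> da * a + db * b = 0 ->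
  da = - (da * - b + db * a) * b /\ db = (da * - b + db * a) * a.
Proof.
  intros H1 H2. destruct (unit_frame_decomp a b da db H1) as [E1 E2].
  rewrite H2 in E1, E2. split; lra.
Qed.

Lemma IVT_no_crossing (g : R -> R) x y v :
  (forall s, Rmin x y <= s <= Rmax x y -> continuity_pt g s /\ g s <> v) ->
  g x < v -> g y < v.
Proof.
  intros H Hx. destruct (Rlt_le_dec (g y) v) as [|Hy]; auto. exfalso.
  assert (Hyv : g y <> v) by (apply H; unfold Rmin, Rmax; destruct (Rle_dec x y); lra).
  assert (Hin : forall s, Rmin x y <= s <= Rmax x y -> continuity_pt (fun s => g s - v) s).
  { intros s Hs. apply (continuity_pt_minus g (fun _ => v)); [apply H; auto|].
    apply continuity_pt_const. intros ? ?; auto. }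
  assert (Hz : forall z, Rmin x y <= z <= Rmax x y -> g z - v <> 0).
  { intros z Hz. apply (H z) in Hz. lra. }
  unfold Rmin, Rmax in Hin, Hz. destruct (Rle_dec x y).
  - destruct (Ranalysis5.IVT_interv (fun s => g s - v) x y) as [z [Hz' Ez]];
      [intros; apply Hin|..]; try lra.
    destruct (Req_dec x y); [subst; lra|lra].
    apply (Hz z); lra.
  - destruct (Ranalysis5.IVT_interv (fun s => - (g s - v)) y x) as [z [Hz' Ez]]; try lra.
    + intros s Hs. apply (continuity_pt_opp (fun s => g s - v)), Hin. lra.
    + apply (Hz z); lra.
Qed.

Lemma IVT_no_crossing_gt (g : R -> R) x y v :
  (forall s, Rmin x y <= s <= Rmax x y -> continuity_pt g s /\ g s <> v) ->
  v < g x -> v < g y.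
Proof.
  intros H Hx. cut (- g y < - v); [lra|].
  apply (IVT_no_crossing (fun s => - g s) x y (- v)); [|lra].
  intros s Hs. destruct (H s Hs) as [A B]. split; [apply (continuity_pt_opp g); auto|lra].
Qed.

Lemma Rpower_pos z a : 0 < Rpower z a.
Proof. apply exp_pos. Qed.

Lemma holder_of_lipschitz_bounded (f : R -> R) M a : 0 < a <= 1 -> 0 <= M ->
  (forall x y, Rabs (f x - f y) <= M * Rabs (x - y)) ->
  (forall x y, Rabs (f x - f y) <= 2) ->
  forall x y, x <> y -> Rabs (f x - f y) <= (M + 2) * Rpower (Rabs (x - y)) a.
Proof.
  intros Ha HM H1 H2 x y Hxy.
  set (z := Rabs (x - y)).
  assert (Hz : 0 < z) by (apply Rabs_pos_lt; lra).
  assert (Hp := Rpower_pos z a).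
  destruct (Rle_dec z 1).
  - assert (z <= Rpower z a).
    { unfold Rpower. rewrite <- (exp_ln z) at 1 by lra.
      assert (ln z <= 0) by (rewrite <- ln_1; apply ln_le; lra).
      destruct (Req_dec (ln z) (a * ln z)) as [E|E]; [rewrite <- E; lra|].
      left. apply exp_increasing. nra. }
    assert (M * z <= M * Rpower z a) by (apply Rmult_le_compat_l; lra).
    specialize (H1 x y). fold z in H1. lra.
  - assert (1 <= Rpower z a) by (rewrite <- (Rpower_O z) by lra; apply Rle_Rpower; lra).
    assert (M * Rpower z a >= 0) by (apply Rle_ge, Rmult_le_pos; lra).
    specialize (H2 x y). lra.
Qed.

Lemma linear_residual_bound kx ky D h e : kx <> 0 -> h <> 0 -> 0 <= e <= Rabs kx / 2 ->
  Rabs (kx * D + ky * h) <= e * (Rabs D + Rabs h) ->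
  Rabs (D / h - - ky / kx) <= e * (2 * Rabs ky / Rabs kx + 2) / Rabs kx.
Proof.
  intros Hkx Hh He Hres.
  set (a := Rabs kx) in *. set (b := Rabs ky).
  assert (Ha : 0 < a) by (apply Rabs_pos_lt; auto).
  assert (Hhp : 0 < Rabs h) by (apply Rabs_pos_lt; auto).
  assert (PD := Rabs_pos D). assert (Pb := Rabs_pos ky). fold b in Pb.
  assert (HaD : a * Rabs D <= b * Rabs h + e * (Rabs D + Rabs h)).
  { unfold a, b. rewrite <- !Rabs_mult.
    replace (kx * D) with ((kx * D + ky * h) + - (ky * h)) by ring.
    eapply Rle_trans; [apply Rabs_triang|]. rewrite Rabs_Ropp. lra. }
  assert (HDC : Rabs D <= (2 * b / a + 1) * Rabs h).
  { apply Rmult_le_reg_l with (a / 2); [lra|].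
    replace (a / 2 * ((2 * b / a + 1) * Rabs h)) with (b * Rabs h + a / 2 * Rabs h) by (field; lra).
    nra. }
  replace (D / h - - ky / kx) with ((kx * D + ky * h) / (kx * h)) by (field; auto).
  unfold Rdiv. rewrite Rabs_mult, Rabs_inv, Rabs_mult. fold a.
  apply Rle_trans with (e * ((2 * b / a + 2) * Rabs h) * / (a * Rabs h)).
  - apply Rmult_le_compat_r; [left; apply Rinv_0_lt_compat; nra|].
    eapply Rle_trans; [apply Hres|]. apply Rmult_le_compat_l; lra.
  - right. field. lra.
Qed.

Lemma implicit_derivable_pt_lim (K : R -> R -> R) (g : R -> R) y0 kx ky :
  differentiable_pt_lim K (g y0) y0 kx ky -> kx <> 0 -> continuity_pt g y0 ->
  locally y0 (fun y => K (g y) y = K (g y0) y0) ->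
  derivable_pt_lim g y0 (- ky / kx).
Proof.
  intros HK Hkx Hg [d3 Hloc] eps Heps.
  set (a := Rabs kx). set (C := 2 * Rabs ky / a + 2).
  assert (Ha : 0 < a) by (apply Rabs_pos_lt; auto).
  assert (HC : 2 <= C).
  { unfold C. assert (0 <= 2 * Rabs ky / a); [|lra].
    apply Rdiv_le_0_compat; [generalize (Rabs_pos ky)|]; lra. }
  set (e := Rmin (a / 2) (eps * a / (2 * C))).
  assert (He : 0 < e) by (apply Rmin_pos; [lra|apply Rdiv_lt_0_compat; nra]).
  assert (He1 := Rmin_l (a / 2) (eps * a / (2 * C))).
  assert (He2 := Rmin_r (a / 2) (eps * a / (2 * C))). fold e in He1, He2.
  destruct (HK (mkposreal _ He)) as [d1 H1]. simpl in H1.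
  destruct (Hg d1 (cond_pos d1)) as [d2 [Hd2 H2]].
  assert (Hd : 0 < Rmin (Rmin d1 d2) d3) by (repeat apply Rmin_pos; auto; apply cond_pos).
  exists (mkposreal _ Hd). intros h Hh0 Hh. simpl in Hh.
  assert (Hm1 := Rmin_l (Rmin d1 d2) d3). assert (Hm2 := Rmin_r (Rmin d1 d2) d3).
  assert (Hm3 := Rmin_l d1 d2). assert (Hm4 := Rmin_r d1 d2).
  set (D := g (y0 + h) - g y0).
  assert (HD : Rabs D < d1).
  { apply (H2 (y0 + h)). split; [split; [exact I|lra]|].
    simpl; unfold R_dist. replace (y0 + h - y0) with h by ring. lra. }
  assert (Hz : K (g (y0 + h)) (y0 + h) = K (g y0) y0).
  { apply Hloc. unfold ball; simpl; unfold AbsRing_ball, abs, minus, plus, opp; simpl.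
    replace (y0 + h + - y0) with h by ring. lra. }
  specialize (H1 (g (y0 + h)) (y0 + h) HD ltac:(replace (y0 + h - y0) with h by ring; lra)).
  fold D in H1. rewrite Hz in H1. replace (y0 + h - y0) with h in H1 by ring.
  replace (K (g y0) y0 - K (g y0) y0 - (kx * D + ky * h)) with (- (kx * D + ky * h)) in H1 by ring.
  rewrite Rabs_Ropp in H1.
  assert (Hres : Rabs (kx * D + ky * h) <= e * (Rabs D + Rabs h)).
  { eapply Rle_trans; [apply H1|]. apply Rmult_le_compat_l; [lra|].
    unfold Rmax; destruct (Rle_dec (Rabs D) (Rabs h)); generalize (Rabs_pos D) (Rabs_pos h); lra. }
  eapply Rle_lt_trans; [apply (linear_residual_bound kx ky D h e); auto; split; [lra|exact He1]|].
  fold a C. apply Rle_lt_trans with (eps * a / (2 * C) * C / a).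
  2: { replace (eps * a / (2 * C) * C / a) with (eps / 2) by (field; lra). lra. }
  unfold Rdiv. apply Rmult_le_compat_r; [left; apply Rinv_0_lt_compat; lra|].
  apply Rmult_le_compat_r; lra.
Qed.

Lemma differentiable_pt_lim_add_linear (f : R -> R) x y l c : derivable_pt_lim f x l ->
  differentiable_pt_lim (fun a b => f a + c * b) x y l c.
Proof.
  intros H eps. destruct (H eps (cond_pos eps)) as [d Hd].
  exists d. intros a b Ha Hb.
  replace (f a + c * b - (f x + c * y) - (l * (a - x) + c * (b - y)))
    with (f a - f x - l * (a - x)) by ring.
  assert (He := cond_pos eps).
  apply Rle_trans with (eps * Rabs (a - x)); [|apply Rmult_le_compat_l; [lra|apply Rmax_l]].
  destruct (Req_dec a x) as [->|Ne].
  - rewrite !Rminus_eq_0, Rmult_0_r, Rminus_0_r, Rabs_R0, Rmult_0_r. lra.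
  - specialize (Hd (a - x) ltac:(lra) Ha). replace (x + (a - x)) with a in Hd by ring.
    replace (f a - f x - l * (a - x)) with (((f a - f x) / (a - x) - l) * (a - x))
      by (field; lra).
    rewrite Rabs_mult. apply Rmult_le_compat_r; [apply Rabs_pos|lra].
Qed.

Lemma unit_dot_pos_of_close a b a' b' : a * a + b * b = 1 -> a' * a' + b' * b' = 1 ->
  Rabs (a - a') < 1 / 4 -> Rabs (b - b') < 1 / 4 -> 0 < a * a' + b * b'.
Proof.
  intros U U' Ha Hb. apply Rabs_lt_between in Ha. apply Rabs_lt_between in Hb.
  assert ((a - a') * (a - a') < 1 / 16) by nra.
  assert ((b - b') * (b - b') < 1 / 16) by nra.
  nra.
Qed.

Lemma unit_cross_abs_le a b a' b' : Rabs a' <= 1 -> Rabs b' <= 1 ->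
  Rabs (b * a' - a * b') <= Rabs (a - a') + Rabs (b - b').
Proof.
  intros Ha Hb.
  replace (b * a' - a * b') with ((b - b') * a' - (a - a') * b') by ring.
  unfold Rminus at 1. eapply Rle_trans; [apply Rabs_triang|].
  rewrite Rabs_Ropp, !Rabs_mult.
  generalize (Rabs_pos (a - a')) (Rabs_pos (b - b')). nra.
Qed.

Lemma continuous_angle_branch (th : R -> R) a0 d : 0 < d ->
  (forall t, 0 < t < d -> continuity_pt th t) ->
  (forall t, 0 < t < d -> 0 < cos (th t - a0)) ->
  exists k : Z, forall t, 0 < t < d -> Rabs (th t - (a0 + 2 * PI * IZR k)) < PI / 2.
Proof.
  intros Hd Hcont Hcos. assert (HP := PI_RGT_0).
  set (t1 := d / 2). assert (Ht1 : 0 < t1 < d) by (unfold t1; lra).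
  destruct (decompose_2PI (th t1 - a0 + PI / 2)) as [k [y [Ey Hy]]].
  assert (Hshift : forall z, cos (z + 2 * PI * IZR k) = cos z).
  { intros z. apply (periodic_shift_Z cos _ cos_2PI_periodic). }
  assert (Hy2 : 0 < y < PI).
  { assert (Hsy : 0 < sin y).
    { replace y with ((th t1 - a0) + PI / 2 - 2 * PI * IZR k) by lra.
      rewrite sin_minus, sin_plus, cos_PI2, sin_PI2.
      replace (2 * PI * IZR k) with (0 + 2 * PI * IZR k) by ring.
      rewrite (periodic_shift_Z sin _ sin_2PI_periodic), Hshift, sin_0, cos_0.
      specialize (Hcos t1 Ht1). nra. }
    split; [destruct (Req_dec y 0) as [->|]; [rewrite sin_0 in Hsy|]; lra|].
    destruct (Rlt_le_dec y PI); auto.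
    assert (sin y <= 0) by (apply sin_le_0; lra). lra. }
  exists k. intros t Ht. set (c := a0 + 2 * PI * IZR k).
  assert (Hg : forall s v, Rmin t1 t <= s <= Rmax t1 t -> cos v = 0 ->
             continuity_pt (fun s => th s - c) s /\ th s - c <> v).
  { intros s v Hs Hv. assert (Hs' : 0 < s < d) by (unfold Rmin, Rmax in Hs; destruct (Rle_dec t1 t); lra).
    split.
    - apply (continuity_pt_minus th (fun _ => c)); [apply Hcont, Hs'|].
      apply continuity_pt_const. intros ? ?; auto.
    - intros E. specialize (Hcos s Hs').
      replace (th s - a0) with (v + 2 * PI * IZR k) in Hcos by (unfold c in E; lra).
      rewrite Hshift in Hcos. lra. }
  apply Rabs_def1.
  - apply (IVT_no_crossing (fun s => th s - c) t1 t (PI / 2)); [|unfold c; lra].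
    intros s Hs. apply Hg; [exact Hs|apply cos_PI2].
  - apply (IVT_no_crossing_gt (fun s => th s - c) t1 t (- (PI / 2))); [|unfold c; lra].
    intros s Hs. apply Hg; [exact Hs|rewrite cos_neg; apply cos_PI2].
Qed.

Lemma small_angle_of_small_sin eps : 0 < eps -> exists eta, 0 < eta /\
  forall x, Rabs x < PI / 2 -> Rabs (sin x) < eta -> Rabs x < eps.
Proof.
  intros Heps.
  assert (Has : continuity_pt asin 0) by (apply derivable_continuous_pt, derivable_pt_asin; lra).
  destruct (Has eps Heps) as [eta [Heta Hasin]].
  exists eta. split; auto. intros x Hx Hs.
  assert (Ex : asin (sin x) = x) by (apply Rabs_def2 in Hx; apply asin_sin; lra).
  destruct (Req_dec (sin x) 0) as [Z|Z].
  - rewrite Z, asin_0 in Ex. rewrite <- Ex, Rabs_R0; auto.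
  - specialize (Hasin (sin x)). simpl in Hasin; unfold R_dist in Hasin.
    rewrite asin_0, !Rminus_0_r, Ex in Hasin. apply Hasin. split; [split; [exact I|auto]|exact Hs].
Qed.

(* A continuous function with values in [2 PI Z] cannot cross the odd multiples
   of [PI], hence is constant. *)
Lemma continuous_2PI_Z_const (G : R -> R) x y : (forall s, continuity_pt G s) ->
  (forall s, exists k : Z, G s = 2 * PI * IZR k) -> G x = G y.
Proof.
  intros GC GZ. assert (HP := PI_RGT_0).
  destruct (GZ x) as [k0 E0], (GZ y) as [k1 E1].
  assert (Hne : forall s (j : Z), G s <> 2 * PI * IZR k0 + 2 * PI * IZR j + PI).
  { intros s j E. destruct (GZ s) as [k Ek]. rewrite Ek in E.
    assert (H : IZR (2 * k) = IZR (2 * k0 + 2 * j + 1)).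
    { rewrite !plus_IZR, !mult_IZR. apply Rmult_eq_reg_l with PI; [|lra]. simpl. lra. }
    apply eq_IZR in H. lia. }
  destruct (Z.lt_total k0 k1) as [Hk|[->|Hk]]; [exfalso| |exfalso].
  - assert (G y < 2 * PI * IZR k0 + 2 * PI * IZR 0 + PI).
    { apply (IVT_no_crossing G x y). intros s _. split; auto. simpl. lra. }
    assert (IZR k0 + 1 <= IZR k1) by (rewrite <- plus_IZR; apply IZR_le; lia).
    simpl in H. nra.
  - congruence.
  - assert (2 * PI * IZR k0 + 2 * PI * IZR (-1) + PI < G y).
    { apply (IVT_no_crossing_gt G x y). intros s _. split; auto. simpl. lra. }
    assert (IZR k1 + 1 <= IZR k0) by (rewrite <- plus_IZR; apply IZR_le; lia).
    simpl in H. nra.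
Qed.

Lemma lipschitz_of_derive_bound (f : R -> R) M : (forall x, ex_derive f x) ->
  (forall x, Rabs (Derive f x) <= M) -> forall x y, Rabs (f x - f y) <= M * Rabs (x - y).
Proof.
  intros Hd HM x y. destruct (MVT_gen f y x (Derive f)) as [c [_ ->]].
  - intros; apply Derive_correct, Hd.
  - intros; apply continuity_pt_of_ex_derive, Hd.
  - rewrite Rabs_mult. apply Rmult_le_compat_r; [apply Rabs_pos|apply HM].
Qed.

Lemma holder_const_nonneg (g : R -> R) C alpha :
  (forall u v, u <> v -> Rabs (g u - g v) <= C * Rpower (Rabs (u - v)) alpha) -> 0 <= C.
Proof.
  intros H. assert (K := H 0 1 ltac:(lra)). assert (P := Rpower_pos (Rabs (0 - 1)) alpha).
  assert (Q := Rabs_pos (g 0 - g 1)). destruct (Rle_dec 0 C); auto. nra.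
Qed.

Lemma Rdiv_diff_abs_le n a b m : 0 <= n -> 0 < m -> m <= a -> m <= b ->
  Rabs (n / a - n / b) <= n / (m * m) * Rabs (a - b).
Proof.
  intros Hn Hm Ha Hb.
  replace (n / a - n / b) with (n / (a * b) * (b - a)) by (field; lra).
  rewrite Rabs_mult, Rabs_minus_sym, (Rabs_right (n / (a * b))) by (apply Rle_ge, Rdiv_le_0_compat; nra).
  apply Rmult_le_compat_r; [apply Rabs_pos|].
  unfold Rdiv. apply Rmult_le_compat_l; auto.
  apply Rinv_le_contravar; [nra|]. apply Rmult_le_compat; lra.
Qed.

Lemma Derive_shift (f : R -> R) x p : ex_derive f (x + p) ->
  Derive f (x + p) = Derive (fun s => f (s + p)) x.
Proof.
  intros H. symmetry. apply is_derive_unique, is_derive_Reals.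
  rewrite <- (Rmult_1_r (Derive f (x + p))).
  apply (derivable_pt_lim_comp (fun s => s + p) f).
  - replace 1 with (1 + 0) by ring.
    apply (derivable_pt_lim_plus (fun s => s) (fun _ => p));
      [apply derivable_pt_lim_id|apply derivable_pt_lim_const].
  - apply is_derive_Reals, Derive_correct, H.
Qed.

(** * The angle of the normal *)

Section NormalAngle.

Variable nu : R -> R -> R * R.

Definition n1 u t := fst (nu u t).
Definition n2 u t := snd (nu u t).
(* [ellnu] is the Legendre curvature [ell] of [nu] and [omega] its analogue in
   time: the angular speeds of [nu] in [u] and in [t]. *)
Definition ellnu u t := Du n1 u t * - n2 u t + Du n2 u t * n1 u t.
Definition omega u t := Dt n1 u t * - n2 u t + Dt n2 u t * n1 u t.

Hypothesis nu_periodic : forall u t, 0 <= t -> nu (u + 2 * PI) t = nu u t.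
Hypothesis n1_C0_C1 : C0_C1 n1.
Hypothesis n2_C0_C1 : C0_C1 n2.
Hypothesis n1_smooth : smooth_pos n1.
Hypothesis n2_smooth : smooth_pos n2.
Hypothesis nu_unit : forall u t, 0 <= t -> n1 u t * n1 u t + n2 u t * n2 u t = 1.
Hypothesis ellnu_pos : forall u t, 0 <= t -> 0 < ellnu u t.

Lemma smooth_pos_ellnu : smooth_pos ellnu.
Proof.
  apply (smooth_pos_ext (reval (RAdd (RMul (RAtom (Du n1)) (RMul (RConst (-1)) (RAtom n2)))
                                     (RMul (RAtom (Du n2)) (RAtom n1))))).
  - apply smooth_pos_reval. simpl. auto using smooth_pos_Du.
  - intros u t _. simpl. unfold ellnu. ring.
Qed.

Lemma smooth_pos_omega : smooth_pos omega.
Proof.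
  apply (smooth_pos_ext (reval (RAdd (RMul (RAtom (Dt n1)) (RMul (RConst (-1)) (RAtom n2)))
                                     (RMul (RAtom (Dt n2)) (RAtom n1))))).
  - apply smooth_pos_reval. simpl. auto using smooth_pos_Dt.
  - intros u t _. simpl. unfold omega. ring.
Qed.

Lemma n1_ex_derive x t : 0 <= t -> ex_derive (fun s => n1 s t) x.
Proof. intros ht. apply (proj1 n1_C0_C1 t ht). Qed.

Lemma n2_ex_derive x t : 0 <= t -> ex_derive (fun s => n2 s t) x.
Proof. intros ht. apply (proj1 n2_C0_C1 t ht). Qed.

Lemma n1_continuous x t : 0 <= t -> continuous (fun s => n1 s t) x.
Proof.
  intros ht. apply (ex_derive_continuous (K := R_AbsRing) (V := R_NormedModule)).
  apply n1_ex_derive, ht.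
Qed.

Lemma n2_continuous x t : 0 <= t -> continuous (fun s => n2 s t) x.
Proof.
  intros ht. apply (ex_derive_continuous (K := R_AbsRing) (V := R_NormedModule)).
  apply n2_ex_derive, ht.
Qed.

Lemma Du_nu_decomp x t : 0 <= t ->
  Du n1 x t = - ellnu x t * n2 x t /\ Du n2 x t = ellnu x t * n1 x t.
Proof.
  intros ht. apply unit_orth_decomp; [apply nu_unit, ht|].
  apply (unit_circle_derive_orth (fun s => n1 s t) (fun s => n2 s t)).
  - apply filter_forall. intros s. apply nu_unit, ht.
  - apply Derive_correct, n1_ex_derive, ht.
  - apply Derive_correct, n2_ex_derive, ht.
Qed.

Lemma Dt_nu_decomp x t : 0 < t ->
  Dt n1 x t = - omega x t * n2 x t /\ Dt n2 x t = omega x t * n1 x t.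
Proof.
  intros ht. apply unit_orth_decomp; [apply nu_unit; lra|].
  apply (unit_circle_derive_orth (fun s => n1 x s) (fun s => n2 x s)).
  - apply (filter_imp (fun s => 0 < s)); [intros s hs; apply nu_unit; lra|].
    apply locally_gt0, ht.
  - apply Derive_correct, (smooth_pos_regular n1 x t n1_smooth ht).
  - apply Derive_correct, (smooth_pos_regular n2 x t n2_smooth ht).
Qed.

Lemma n1_abs_le1 x t : 0 <= t -> Rabs (n1 x t) <= 1.
Proof. intros ht. generalize (nu_unit x t ht). intros. apply Rabs_le. split; nra. Qed.

Lemma n2_abs_le1 x t : 0 <= t -> Rabs (n2 x t) <= 1.
Proof. intros ht. generalize (nu_unit x t ht). intros. apply Rabs_le. split; nra. Qed.

Lemma Du_n1_abs_le x t M : 0 <= t -> ellnu x t <= M -> Rabs (Du n1 x t) <= M.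
Proof.
  intros ht HM. rewrite (proj1 (Du_nu_decomp x t ht)), Rabs_mult, Rabs_Ropp.
  rewrite Rabs_right by (left; apply ellnu_pos, ht).
  generalize (n2_abs_le1 x t ht) (ellnu_pos x t ht) (Rabs_pos (n2 x t)). nra.
Qed.

Lemma Du_n2_abs_le x t M : 0 <= t -> ellnu x t <= M -> Rabs (Du n2 x t) <= M.
Proof.
  intros ht HM. rewrite (proj2 (Du_nu_decomp x t ht)), Rabs_mult.
  rewrite Rabs_right by (left; apply ellnu_pos, ht).
  generalize (n1_abs_le1 x t ht) (ellnu_pos x t ht) (Rabs_pos (n1 x t)). nra.
Qed.

Lemma ellnu_diff_bound x t y s M : 0 <= t -> 0 <= s -> ellnu y s <= M ->
  Rabs (ellnu x t - ellnu y s) <=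
    Rabs (Du n1 x t - Du n1 y s) + Rabs (Du n2 x t - Du n2 y s)
    + M * (Rabs (n1 x t - n1 y s) + Rabs (n2 x t - n2 y s)).
Proof.
  intros ht hs HM. unfold ellnu.
  replace (Du n1 x t * - n2 x t + Du n2 x t * n1 x t - (Du n1 y s * - n2 y s + Du n2 y s * n1 y s))
    with (- ((Du n1 x t - Du n1 y s) * n2 x t) - Du n1 y s * (n2 x t - n2 y s)
          + ((Du n2 x t - Du n2 y s) * n1 x t + Du n2 y s * (n1 x t - n1 y s))) by ring.
  assert (B1 := Du_n1_abs_le y s M hs HM). assert (B2 := Du_n2_abs_le y s M hs HM).
  assert (A1 := n1_abs_le1 x t ht). assert (A2 := n2_abs_le1 x t ht).
  assert (Q1 : Rabs ((Du n1 x t - Du n1 y s) * n2 x t) <= Rabs (Du n1 x t - Du n1 y s)).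
  { rewrite Rabs_mult. generalize (Rabs_pos (Du n1 x t - Du n1 y s)). nra. }
  assert (Q2 : Rabs (Du n1 y s * (n2 x t - n2 y s)) <= M * Rabs (n2 x t - n2 y s)).
  { rewrite Rabs_mult. apply Rmult_le_compat_r; [apply Rabs_pos|auto]. }
  assert (Q3 : Rabs ((Du n2 x t - Du n2 y s) * n1 x t) <= Rabs (Du n2 x t - Du n2 y s)).
  { rewrite Rabs_mult. generalize (Rabs_pos (Du n2 x t - Du n2 y s)). nra. }
  assert (Q4 : Rabs (Du n2 y s * (n1 x t - n1 y s)) <= M * Rabs (n1 x t - n1 y s)).
  { rewrite Rabs_mult. apply Rmult_le_compat_r; [apply Rabs_pos|auto]. }
  unfold Rminus at 1. eapply Rle_trans; [apply Rabs_triang|].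
  eapply Rle_trans; [apply Rplus_le_compat; apply Rabs_triang|].
  rewrite !Rabs_Ropp. lra.
Qed.

Lemma n1_periodic x t : 0 <= t -> n1 (x + 2 * PI) t = n1 x t.
Proof. intros; unfold n1; rewrite nu_periodic; auto. Qed.

Lemma n2_periodic x t : 0 <= t -> n2 (x + 2 * PI) t = n2 x t.
Proof. intros; unfold n2; rewrite nu_periodic; auto. Qed.

Lemma Du_n1_periodic x t : 0 <= t -> Du n1 (x + 2 * PI) t = Du n1 x t.
Proof.
  intros ht. unfold Du. rewrite Derive_shift by (apply n1_ex_derive, ht).
  apply Derive_ext. intros; apply n1_periodic, ht.
Qed.

Lemma Du_n2_periodic x t : 0 <= t -> Du n2 (x + 2 * PI) t = Du n2 x t.
Proof.
  intros ht. unfold Du. rewrite Derive_shift by (apply n2_ex_derive, ht).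
  apply Derive_ext. intros; apply n2_periodic, ht.
Qed.

Lemma ellnu_periodic x t : 0 <= t -> ellnu (x + 2 * PI) t = ellnu x t.
Proof.
  intros ht. unfold ellnu.
  rewrite Du_n1_periodic, Du_n2_periodic, n1_periodic, n2_periodic; auto.
Qed.

Lemma ellnu_continuous x t : 0 <= t -> continuous (fun s => ellnu s t) x.
Proof.
  intros ht. unfold ellnu.
  assert (C1 := proj2 (proj1 n1_C0_C1 t ht) x). assert (C2 := proj2 (proj1 n2_C0_C1 t ht) x).
  apply (continuous_plus (fun s => Du n1 s t * - n2 s t) (fun s => Du n2 s t * n1 s t)).
  - apply (continuous_mult (fun s => Du n1 s t) (fun s => - n2 s t)); [apply C1|].
    apply (continuous_opp (fun s => n2 s t)), n2_continuous, ht.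
  - apply (continuous_mult (fun s => Du n2 s t) (fun s => n1 s t)); [apply C2|].
    apply n1_continuous, ht.
Qed.

Lemma ellnu_continuity_pt x t : 0 <= t -> continuity_pt (fun s => ellnu s t) x.
Proof. intros. apply continuity_pt_filterlim, ellnu_continuous; auto. Qed.

Lemma ellnu_lower_bound t : 0 <= t -> exists m, 0 < m /\ forall x, m <= ellnu x t.
Proof.
  intros ht. assert (HP := PI_RGT_0).
  destruct (continuity_ab_min (fun s => ellnu s t) 0 (2 * PI)) as [mx [H1 H2]];
    [lra|intros; apply ellnu_continuity_pt, ht|].
  exists (ellnu mx t). split; [apply ellnu_pos, ht|].
  intros x. destruct (periodic_2PI_reduce (fun s => ellnu s t)) with (x := x) as [y [Hy ->]].
  - intros; apply ellnu_periodic, ht.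
  - apply H1; auto.
Qed.

Lemma ellnu_upper_bound t : 0 <= t -> exists M, forall x, ellnu x t <= M.
Proof.
  intros ht. assert (HP := PI_RGT_0).
  destruct (continuity_ab_maj (fun s => ellnu s t) 0 (2 * PI)) as [mx [H1 H2]];
    [lra|intros; apply ellnu_continuity_pt, ht|].
  exists (ellnu mx t).
  intros x. destruct (periodic_2PI_reduce (fun s => ellnu s t)) with (x := x) as [y [Hy ->]].
  - intros; apply ellnu_periodic, ht.
  - apply H1; auto.
Qed.

Lemma C0_C1_at f t0 eps : C0_C1 f -> 0 <= t0 -> 0 < eps -> exists delta, 0 < delta /\
  forall t, 0 <= t -> Rabs (t - t0) < delta -> forall u,
    Rabs (f u t - f u t0) < eps /\ Rabs (Du f u t - Du f u t0) < eps.
Proof. intros [_ Hf] ht0 He. apply (Hf t0 ht0 eps He). Qed.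

Lemma ellnu_uniform_continuous_t t0 : 0 <= t0 -> forall eps, 0 < eps -> exists delta, 0 < delta /\
  forall t, 0 <= t -> Rabs (t - t0) < delta -> forall x, Rabs (ellnu x t - ellnu x t0) < eps.
Proof.
  intros ht0 eps Heps.
  destruct (ellnu_upper_bound t0 ht0) as [M HM].
  assert (HM0 : 0 <= M) by (generalize (ellnu_pos 0 t0 ht0) (HM 0); lra).
  set (eta := eps / (2 * M + 3)).
  assert (Heta : 0 < eta) by (apply Rdiv_lt_0_compat; lra).
  destruct (C0_C1_at n1 t0 eta n1_C0_C1 ht0 Heta) as [d1 [Hd1 E1]].
  destruct (C0_C1_at n2 t0 eta n2_C0_C1 ht0 Heta) as [d2 [Hd2 E2]].
  exists (Rmin d1 d2). split; [apply Rmin_pos; auto|].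
  intros t ht Htt x.
  destruct (E1 t ht) with (u := x) as [A1 B1]; [eapply Rlt_le_trans; [apply Htt|apply Rmin_l]|].
  destruct (E2 t ht) with (u := x) as [A2 B2]; [eapply Rlt_le_trans; [apply Htt|apply Rmin_r]|].
  eapply Rle_lt_trans; [apply (ellnu_diff_bound x t x t0 M ht ht0 (HM x))|].
  assert (HMeta : M * (Rabs (n1 x t - n1 x t0) + Rabs (n2 x t - n2 x t0)) <= M * (2 * eta)).
  { apply Rmult_le_compat_l; lra. }
  assert (Hsum : (2 * M + 3) * eta = eps) by (unfold eta; field; lra).
  lra.
Qed.

Lemma ellnu_local_lower_bound t0 : 0 <= t0 -> exists m delta, 0 < m /\ 0 < delta /\
  forall t, 0 <= t -> Rabs (t - t0) < delta -> forall x, m <= ellnu x t.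
Proof.
  intros ht0. destruct (ellnu_lower_bound t0 ht0) as [m0 [Hm0 Hm]].
  destruct (ellnu_uniform_continuous_t t0 ht0 (m0 / 2)) as [d [Hd E]]; [lra|].
  exists (m0 / 2), d. split; [lra|split; auto].
  intros t ht Htt x. specialize (E t ht Htt x). specialize (Hm x).
  apply Rabs_lt_between in E. lra.
Qed.

Lemma omega_continuous_t x t : 0 < t -> continuous (fun s => omega x s) t.
Proof. intros ht. apply continuous2_t, (smooth_pos_regular omega x t smooth_pos_omega ht). Qed.

Lemma nu_angle_exists u t : 0 <= t -> exists th, sin th = n1 u t /\ - cos th = n2 u t.
Proof. intros ht. apply unit_vector_angle, nu_unit, ht. Qed.

(* For [t > 0] the angle of [nu 0 t] is obtained by integrating its angular speed
   from [t = 1]; its limit at [t = 0] exists because [nu] is continuous there. *)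
Definition angle_pos_init := epsilon (inhabits 0) (fun th => sin th = n1 0 1 /\ - cos th = n2 0 1).
Definition angle_pos t := angle_pos_init + RInt (omega 0) 1 t.

Lemma angle_pos_derive t : 0 < t -> is_derive angle_pos t (omega 0 t).
Proof.
  intros ht. unfold angle_pos.
  rewrite <- (Rplus_0_l (omega 0 t)).
  apply (is_derive_plus (fun _ => angle_pos_init) (fun t => RInt (omega 0) 1 t)).
  - apply (is_derive_const (K := R_AbsRing) (V := R_NormedModule)).
  - apply (is_derive_RInt (omega 0) _ 1); [|apply omega_continuous_t, ht].
    apply (filter_imp (fun s => 0 < s)); [|apply locally_gt0, ht].
    intros b hb. apply (RInt_correct (V := R_CompleteNormedModule)).
    apply (ex_RInt_continuous (V := R_CompleteNormedModule)).
    intros z Hz. apply omega_continuous_t. unfold Rmin in Hz; destruct (Rle_dec 1 b); lra.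
Qed.

Lemma nu_angle_pos t : 0 < t -> n1 0 t = sin (angle_pos t) /\ n2 0 t = - cos (angle_pos t).
Proof.
  intros ht.
  assert (E : sin angle_pos_init = n1 0 1 /\ - cos angle_pos_init = n2 0 1)
    by (unfold angle_pos_init; apply epsilon_spec, nu_angle_exists; lra).
  apply (angle_lift_propagate (fun s => n1 0 s) (fun s => n2 0 s) angle_pos (omega 0) t 1).
  - intros s Hs. assert (hs : 0 < s) by (unfold Rmin in Hs; destruct (Rle_dec t 1); lra).
    destruct (Dt_nu_decomp 0 s hs) as [D1 D2].
    split; [|split]; [rewrite <- D1|rewrite <- D2|apply angle_pos_derive, hs];
      apply Derive_correct; [apply (smooth_pos_regular n1 0 s)|apply (smooth_pos_regular n2 0 s)]; auto.
  - unfold angle_pos. rewrite RInt_point, Rplus_0_r. lra.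
  - unfold angle_pos. rewrite RInt_point, Rplus_0_r. lra.
Qed.

Lemma angle_pos_sin_cos_diff t a0 : 0 < t -> sin a0 = n1 0 0 -> - cos a0 = n2 0 0 ->
  cos (angle_pos t - a0) = n1 0 t * n1 0 0 + n2 0 t * n2 0 0 /\
  sin (angle_pos t - a0) = n2 0 t * n1 0 0 - n1 0 t * n2 0 0.
Proof.
  intros ht Hs Hc. destruct (nu_angle_pos t ht) as [E1 E2].
  rewrite cos_minus, sin_minus, E1, E2, <- Hs, <- Hc. split; ring.
Qed.

Lemma nu0_close eps : 0 < eps -> exists delta, 0 < delta /\ forall t, 0 <= t -> t < delta ->
  Rabs (n1 0 t - n1 0 0) < eps /\ Rabs (n2 0 t - n2 0 0) < eps.
Proof.
  intros He.
  destruct (C0_C1_at n1 0 eps n1_C0_C1 (Rle_refl 0) He) as [d1 [Hd1 E1]].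
  destruct (C0_C1_at n2 0 eps n2_C0_C1 (Rle_refl 0) He) as [d2 [Hd2 E2]].
  exists (Rmin d1 d2). split; [apply Rmin_pos; auto|].
  intros t ht Htd. assert (H1 := Rmin_l d1 d2). assert (H2 := Rmin_r d1 d2).
  rewrite <- (Rminus_0_r t) in Htd. rewrite <- (Rabs_right (t - 0)) in Htd by lra.
  split; [apply (E1 t ht)|apply (E2 t ht)]; lra.
Qed.

Lemma angle_pos_limit_0 : exists c, sin c = n1 0 0 /\ - cos c = n2 0 0 /\
  forall eps, 0 < eps -> exists delta, 0 < delta /\
    forall t, 0 < t < delta -> Rabs (angle_pos t - c) < eps.
Proof.
  destruct (nu_angle_exists 0 0 (Rle_refl 0)) as [a0 [Ea1 Ea2]].
  destruct (nu0_close (1 / 4)) as [d1 [Hd1 E1]]; [lra|].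
  destruct (continuous_angle_branch angle_pos a0 d1 Hd1) as [k Hk].
  { intros t Ht. apply continuity_pt_filterlim.
    apply (ex_derive_continuous (K := R_AbsRing) (V := R_NormedModule)).
    eexists; apply angle_pos_derive; lra. }
  { intros t Ht. rewrite (proj1 (angle_pos_sin_cos_diff t a0 ltac:(lra) Ea1 Ea2)).
    destruct (E1 t ltac:(lra) ltac:(lra)).
    apply unit_dot_pos_of_close; auto; apply nu_unit; lra. }
  set (c := a0 + 2 * PI * IZR k).
  assert (Hsc : forall z, sin (z + 2 * PI * IZR k) = sin z).
  { apply (periodic_shift_Z sin _ sin_2PI_periodic). }
  assert (Hcc : forall z, cos (z + 2 * PI * IZR k) = cos z).
  { apply (periodic_shift_Z cos _ cos_2PI_periodic). }
  exists c. split; [unfold c; rewrite Hsc; auto|split; [unfold c; rewrite Hcc; auto|]].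
  intros eps Heps.
  destruct (small_angle_of_small_sin eps Heps) as [eta [Heta Hsmall]].
  destruct (nu0_close (eta / 2)) as [d2 [Hd2 E2]]; [lra|].
  exists (Rmin d1 d2). split; [apply Rmin_pos; auto|].
  intros t Ht. assert (H1 := Rmin_l d1 d2). assert (H2 := Rmin_r d1 d2).
  apply Hsmall; [apply Hk; lra|].
  replace (angle_pos t - c) with ((angle_pos t - a0) + 2 * PI * IZR (- k))
    by (unfold c; rewrite opp_IZR; ring).
  rewrite (periodic_shift_Z sin _ sin_2PI_periodic).
  rewrite (proj2 (angle_pos_sin_cos_diff t a0 ltac:(lra) Ea1 Ea2)).
  destruct (E2 t ltac:(lra) ltac:(lra)).
  eapply Rle_lt_trans; [apply unit_cross_abs_le; apply n1_abs_le1 || apply n2_abs_le1; lra|].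
  lra.
Qed.

Definition angle0_init := epsilon (inhabits 0) (fun c => sin c = n1 0 0 /\ - cos c = n2 0 0 /\
  forall eps, 0 < eps -> exists delta, 0 < delta /\
    forall t, 0 < t < delta -> Rabs (angle_pos t - c) < eps).

Lemma angle0_init_spec : sin angle0_init = n1 0 0 /\ - cos angle0_init = n2 0 0 /\
  forall eps, 0 < eps -> exists delta, 0 < delta /\
    forall t, 0 < t < delta -> Rabs (angle_pos t - angle0_init) < eps.
Proof. unfold angle0_init. apply epsilon_spec, angle_pos_limit_0. Qed.

Definition angle0 t := if Rle_dec t 0 then angle0_init else angle_pos t.

Lemma nu_angle0 t : 0 <= t -> n1 0 t = sin (angle0 t) /\ n2 0 t = - cos (angle0 t).
Proof.
  intros ht. unfold angle0. destruct (Rle_dec t 0).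
  - replace t with 0 by lra. destruct angle0_init_spec as [A [B _]]. split; lra.
  - apply nu_angle_pos. lra.
Qed.

Lemma angle0_continuous t0 : 0 <= t0 -> forall eps, 0 < eps -> exists delta, 0 < delta /\
  forall t, 0 <= t -> Rabs (t - t0) < delta -> Rabs (angle0 t - angle0 t0) < eps.
Proof.
  intros ht0 eps Heps. unfold angle0.
  destruct (Rle_dec t0 0) as [Z|Z].
  - destruct angle0_init_spec as [_ [_ C]]. destruct (C eps Heps) as [d [Hd E]].
    exists d. split; auto. intros t ht Htd. destruct (Rle_dec t 0).
    + rewrite Rminus_eq_0, Rabs_R0; auto.
    + apply E. replace t0 with 0 in Htd by lra. rewrite Rminus_0_r, Rabs_right in Htd; lra.
  - assert (Hc : continuity_pt angle_pos t0).
    { apply continuity_pt_filterlim.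
      apply (ex_derive_continuous (K := R_AbsRing) (V := R_NormedModule)).
      eexists; apply angle_pos_derive; lra. }
    destruct (Hc eps Heps) as [d [Hd E]].
    exists (Rmin d t0). split; [apply Rmin_pos; lra|].
    intros t _ Htd. assert (H1 := Rmin_l d t0). assert (H2 := Rmin_r d t0).
    assert (Htd2 : Rabs (t - t0) < t0) by lra. apply Rabs_lt_between' in Htd2.
    destruct (Rle_dec t 0); [lra|].
    destruct (Req_dec t t0) as [->|Ne]; [rewrite Rminus_eq_0, Rabs_R0; auto|].
    apply (E t). split; [split; [exact I|auto]|simpl; unfold R_dist; lra].
Qed.

Definition ell_integral x t := RInt (fun s => ellnu s t) 0 x.
Definition angle x t := angle0 t + ell_integral x t.

Lemma ellnu_ex_RInt t a b : 0 <= t -> ex_RInt (fun s => ellnu s t) a b.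
Proof.
  intros ht. apply (ex_RInt_continuous (V := R_CompleteNormedModule)).
  intros; apply ellnu_continuous, ht.
Qed.

Lemma ell_integral_derive x t : 0 <= t -> is_derive (fun y => ell_integral y t) x (ellnu x t).
Proof.
  intros ht. apply (is_derive_RInt (fun s => ellnu s t) _ 0); [|apply ellnu_continuous, ht].
  apply filter_forall. intros b. apply (RInt_correct (V := R_CompleteNormedModule)).
  apply ellnu_ex_RInt, ht.
Qed.

Lemma angle_derive x t : 0 <= t -> is_derive (fun y => angle y t) x (ellnu x t).
Proof.
  intros ht. unfold angle. rewrite <- (Rplus_0_l (ellnu x t)).
  apply (is_derive_plus (fun _ => angle0 t) (fun y => ell_integral y t)).
  - apply (is_derive_const (K := R_AbsRing) (V := R_NormedModule)).
  - apply ell_integral_derive, ht.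
Qed.

Lemma angle_continuity_pt x t : 0 <= t -> continuity_pt (fun s => angle s t) x.
Proof.
  intros ht. apply continuity_pt_of_ex_derive. eexists; apply angle_derive, ht.
Qed.

Lemma angle_at_0 t : angle 0 t = angle0 t.
Proof. unfold angle, ell_integral. rewrite RInt_point. apply Rplus_0_r. Qed.

Lemma nu_angle x t : 0 <= t -> n1 x t = sin (angle x t) /\ n2 x t = - cos (angle x t).
Proof.
  intros ht. destruct (nu_angle0 t ht) as [E1 E2].
  apply (angle_lift_propagate (fun s => n1 s t) (fun s => n2 s t) (fun s => angle s t)
           (fun s => ellnu s t) x 0); [|rewrite angle_at_0; auto..].
  intros s _. destruct (Du_nu_decomp s t ht) as [D1 D2].
  split; [|split]; [rewrite <- D1|rewrite <- D2|apply angle_derive, ht];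
    apply Derive_correct; [apply n1_ex_derive|apply n2_ex_derive]; auto.
Qed.

Lemma ell_integral_2PI_Z t : 0 <= t -> exists k : Z, ell_integral (2 * PI) t = 2 * PI * IZR k.
Proof.
  intros ht. destruct (nu_angle (2 * PI) t ht) as [A1 A2], (nu_angle 0 t ht) as [B1 B2].
  rewrite <- (Rplus_0_l (2 * PI)), n1_periodic in A1 by auto.
  rewrite <- (Rplus_0_l (2 * PI)), n2_periodic in A2 by auto.
  rewrite Rplus_0_l in A1, A2.
  destruct (sin_cos_inj_mod_2PI (angle (2 * PI) t) (angle 0 t)) as [k Ek]; [lra|lra|].
  exists k. rewrite angle_at_0 in Ek. unfold angle in Ek. lra.
Qed.

Lemma ell_integral_diff_bound x t t0 eta : 0 <= t -> 0 <= t0 ->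
  (forall s, Rabs (ellnu s t - ellnu s t0) <= eta) ->
  Rabs (ell_integral x t - ell_integral x t0) <= Rabs x * eta.
Proof.
  intros ht ht0 H. unfold ell_integral.
  assert (Hi : forall a b, ex_RInt (fun s => ellnu s t - ellnu s t0) a b).
  { intros. apply (ex_RInt_minus (V := R_CompleteNormedModule)); apply ellnu_ex_RInt; auto. }
  rewrite <- (RInt_minus (V := R_CompleteNormedModule)) by (apply ellnu_ex_RInt; auto).
  destruct (Rle_dec 0 x).
  - rewrite (Rabs_right x) by lra. replace (x * eta) with ((x - 0) * eta) by ring.
    apply abs_RInt_le_const; auto.
  - rewrite <- (opp_RInt_swap (V := R_CompleteNormedModule)) by auto.
    unfold opp; simpl. rewrite Rabs_Ropp, (Rabs_left x) by lra.
    replace (- x) with (0 - x) by ring. apply abs_RInt_le_const; auto; lra.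
Qed.

Lemma ell_integral_continuous_t x t0 : 0 <= t0 -> forall eps, 0 < eps ->
  exists delta, 0 < delta /\
    forall t, 0 <= t -> Rabs (t - t0) < delta -> Rabs (ell_integral x t - ell_integral x t0) < eps.
Proof.
  intros ht0 eps Heps. assert (Hx := Rabs_pos x).
  destruct (ellnu_uniform_continuous_t t0 ht0 (eps / (Rabs x + 1))) as [d [Hd E]];
    [apply Rdiv_lt_0_compat; lra|].
  exists d. split; auto. intros t ht Htd.
  eapply Rle_lt_trans; [apply (ell_integral_diff_bound x t t0 (eps / (Rabs x + 1))); auto|].
  - intros s; left; apply E; auto.
  - assert (0 < eps / (Rabs x + 1)) by (apply Rdiv_lt_0_compat; lra).
    replace (Rabs x * (eps / (Rabs x + 1))) with (eps - eps / (Rabs x + 1)) by (field; lra).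
    lra.
Qed.

Lemma Rmax_0_lipschitz a b : Rabs (Rmax 0 a - Rmax 0 b) <= Rabs (a - b).
Proof.
  unfold Rmax. destruct (Rle_dec 0 a), (Rle_dec 0 b); unfold Rabs;
    repeat destruct Rcase_abs; lra.
Qed.

Lemma ell_integral_2PI_const t : 0 <= t -> ell_integral (2 * PI) t = ell_integral (2 * PI) 0.
Proof.
  intros ht. set (G := fun s => ell_integral (2 * PI) (Rmax 0 s)).
  replace t with (Rmax 0 t) by (apply Rmax_right, ht).
  rewrite <- (Rmax_left 0 0) at 2 by lra.
  apply (continuous_2PI_Z_const G).
  - intros s eps Heps.
    destruct (ell_integral_continuous_t (2 * PI) (Rmax 0 s) (Rmax_l 0 s) eps Heps) as [d [Hd E]].
    exists d. split; auto. intros y [_ Hy]. simpl in *; unfold R_dist in *.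
    apply E; [apply Rmax_l|]. eapply Rle_lt_trans; [apply Rmax_0_lipschitz|auto].
  - intros s. apply ell_integral_2PI_Z, Rmax_l.
Qed.

Lemma ell_integral_2PI_pos : 0 < ell_integral (2 * PI) 0.
Proof.
  assert (HP := PI_RGT_0). apply RInt_gt_0; [lra| |].
  - intros; apply ellnu_pos; lra.
  - intros; apply ellnu_continuous; lra.
Qed.

Lemma degree_exists : exists n : nat, ell_integral (2 * PI) 0 = 2 * PI * INR n.
Proof.
  assert (HP := PI_RGT_0). assert (Hpos := ell_integral_2PI_pos).
  destruct (ell_integral_2PI_Z 0 (Rle_refl 0)) as [k Ek].
  assert (Hk : (0 <= k)%Z) by (apply le_IZR; rewrite Ek in Hpos; simpl; nra).
  exists (Z.to_nat k). rewrite INR_IZR_INZ, Z2Nat.id; auto.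
Qed.

Definition degree := epsilon (inhabits 0%nat)
  (fun n : nat => ell_integral (2 * PI) 0 = 2 * PI * INR n).

Lemma ell_integral_2PI t : 0 <= t -> ell_integral (2 * PI) t = 2 * PI * INR degree.
Proof.
  intros ht. rewrite ell_integral_2PI_const by auto.
  unfold degree. apply epsilon_spec, degree_exists.
Qed.

Lemma degree_pos : 0 < INR degree.
Proof.
  assert (HP := PI_RGT_0). assert (H := ell_integral_2PI_pos).
  rewrite ell_integral_2PI in H by lra. nra.
Qed.

Lemma angle_periodic x t : 0 <= t -> angle (x + 2 * PI) t = angle x t + 2 * PI * INR degree.
Proof.
  intros ht.
  assert (E : (fun y => ell_integral (y + 2 * PI) t - ell_integral y t) x =
              (fun y => ell_integral (y + 2 * PI) t - ell_integral y t) 0).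
  { apply (const_of_derive_0 (fun y => ell_integral (y + 2 * PI) t - ell_integral y t)).
    intros s _.
    replace 0 with (1 * ellnu (s + 2 * PI) t - ellnu s t) by (rewrite ellnu_periodic; auto; ring).
    apply (is_derive_minus (fun y => ell_integral (y + 2 * PI) t) (fun y => ell_integral y t));
      [|apply ell_integral_derive, ht].
    apply (is_derive_comp (fun y => ell_integral y t) (fun y => y + 2 * PI));
      [apply ell_integral_derive, ht|].
    rewrite <- (Rplus_0_r 1).
    apply (is_derive_plus (fun y => y) (fun _ => 2 * PI)).
    - apply (is_derive_id (K := R_AbsRing)).
    - apply (is_derive_const (K := R_AbsRing) (V := R_NormedModule)). }
  simpl in E. rewrite Rplus_0_l, ell_integral_2PI in E by auto.
  unfold ell_integral in E at 3. rewrite RInt_point in E. unfold zero in E. simpl in E.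
  unfold angle. lra.
Qed.

Lemma angle_increase x y t m : 0 <= t -> (forall s, m <= ellnu s t) -> y <= x ->
  m * (x - y) <= angle x t - angle y t.
Proof.
  intros ht Hm Hxy.
  destruct (MVT_gen (fun s => angle s t) y x (fun s => ellnu s t)) as [c [_ ->]].
  - intros; apply angle_derive, ht.
  - intros; apply angle_continuity_pt, ht.
  - apply Rmult_le_compat_r; [lra|apply Hm].
Qed.

Lemma angle_surjective t v : 0 <= t -> exists x, angle x t = v.
Proof.
  intros ht. destruct (ellnu_lower_bound t ht) as [m [Hm Hml]].
  set (r := Rabs (v - angle 0 t) / m + 1).
  assert (Hr : 1 <= r).
  { unfold r. assert (0 <= Rabs (v - angle 0 t) / m) by (apply Rdiv_le_0_compat; [apply Rabs_pos|lra]).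
    lra. }
  assert (H1 := angle_increase r 0 t m ht Hml ltac:(lra)).
  assert (H2 := angle_increase 0 (- r) t m ht Hml ltac:(lra)).
  assert (Hmr : m * r = Rabs (v - angle 0 t) + m) by (unfold r; field; lra).
  assert (A1 := RRle_abs (v - angle 0 t)). assert (A2 := Rabs_minus_sym v (angle 0 t)).
  assert (A3 := RRle_abs (angle 0 t - v)).
  destruct (Ranalysis5.IVT_interv (fun s => angle s t - v) (- r) r) as [z [_ Ez]];
    [|lra|simpl; nra|simpl; nra|exists z; lra].
  intros a _. apply (continuity_pt_minus (fun s => angle s t) (fun _ => v));
    [apply angle_continuity_pt, ht|apply continuity_pt_const; intros ? ?; auto].
Qed.

Lemma angle_injective x y t : 0 <= t -> angle x t = angle y t -> x = y.
Proof.
  intros ht E. destruct (ellnu_lower_bound t ht) as [m [Hm Hml]].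
  destruct (Rle_dec y x).
  - assert (H := angle_increase x y t m ht Hml r). nra.
  - assert (H := angle_increase y x t m ht Hml ltac:(lra)). nra.
Qed.

Definition phi u t := epsilon (inhabits 0) (fun x => angle x t = INR degree * u).

Lemma angle_phi u t : 0 <= t -> angle (phi u t) t = INR degree * u.
Proof.
  intros ht. unfold phi. apply (epsilon_spec (inhabits 0) (fun x => angle x t = INR degree * u)).
  apply angle_surjective, ht.
Qed.

Lemma nu_phi u t : 0 <= t ->
  n1 (phi u t) t = sin (INR degree * u) /\ n2 (phi u t) t = - cos (INR degree * u).
Proof. intros ht. rewrite <- (angle_phi u t ht). apply nu_angle, ht. Qed.

Lemma phi_periodic u t : 0 <= t -> phi (u + 2 * PI) t = phi u t + 2 * PI.
Proof.
  intros ht. apply (angle_injective _ _ t ht).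
  rewrite angle_periodic, !angle_phi by auto. ring.
Qed.

Lemma phi_increase u v t m : 0 <= t -> (forall s, m <= ellnu s t) -> 0 < m -> v <= u ->
  phi v t <= phi u t /\ m * (phi u t - phi v t) <= INR degree * (u - v).
Proof.
  intros ht Hm hm Huv. assert (Hn := degree_pos).
  assert (Hle : phi v t <= phi u t).
  { destruct (Rle_dec (phi v t) (phi u t)) as [|Hlt]; auto. exfalso.
    assert (H := angle_increase (phi v t) (phi u t) t m ht Hm ltac:(lra)).
    rewrite !angle_phi in H by auto.
    assert (0 < m * (phi v t - phi u t)) by (apply Rmult_lt_0_compat; lra). nra. }
  split; auto. assert (H := angle_increase (phi u t) (phi v t) t m ht Hm Hle).
  rewrite !angle_phi in H by auto. lra.
Qed.

Lemma phi_lipschitz u v t m : 0 <= t -> (forall s, m <= ellnu s t) -> 0 < m ->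
  Rabs (phi u t - phi v t) <= INR degree / m * Rabs (u - v).
Proof.
  intros ht Hm hm. assert (Hn := degree_pos).
  apply Rmult_le_reg_l with m; auto.
  replace (m * (INR degree / m * Rabs (u - v))) with (INR degree * Rabs (u - v)) by (field; lra).
  destruct (Rle_dec v u).
  - destruct (phi_increase u v t m ht Hm hm r) as [A B]. rewrite !Rabs_right by lra. lra.
  - destruct (phi_increase v u t m ht Hm hm ltac:(lra)) as [A B].
    rewrite !Rabs_left1 by lra. lra.
Qed.

Lemma phi_derive_u u t : 0 <= t ->
  derivable_pt_lim (fun s => phi s t) u (INR degree / ellnu (phi u t) t).
Proof.
  intros ht. destruct (ellnu_lower_bound t ht) as [m [hm Hm]]. assert (Hn := degree_pos).
  assert (HL := ellnu_pos (phi u t) t ht).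
  replace (INR degree / ellnu (phi u t) t) with (- (- INR degree) / ellnu (phi u t) t)
    by (field; lra).
  apply (implicit_derivable_pt_lim (fun a b => angle a t + (- INR degree) * b) (fun s => phi s t)).
  - apply differentiable_pt_lim_add_linear, is_derive_Reals, angle_derive, ht.
  - lra.
  - intros eps Heps. exists (eps * m / INR degree).
    split; [apply Rdiv_lt_0_compat; nra|].
    intros x [_ Hx]. simpl in *; unfold R_dist in *.
    eapply Rle_lt_trans; [apply (phi_lipschitz x u t m ht Hm hm)|].
    apply Rmult_lt_reg_l with (m / INR degree); [apply Rdiv_lt_0_compat; auto|].
    replace (m / INR degree * (INR degree / m * Rabs (x - u))) with (Rabs (x - u)) by (field; lra).
    replace (m / INR degree * eps) with (eps * m / INR degree) by (field; lra). auto.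
  - apply filter_forall. intros s. simpl. rewrite !angle_phi by auto. ring.
Qed.

Lemma Du_phi u t : 0 <= t -> Derive (fun s => phi s t) u = INR degree / ellnu (phi u t) t.
Proof. intros ht. apply is_derive_unique, is_derive_Reals, phi_derive_u, ht. Qed.

Lemma phi_close u t t0 m : 0 <= t -> 0 <= t0 -> (forall s, m <= ellnu s t) -> 0 < m ->
  Rabs (phi u t - phi u t0) <= / m * Rabs (angle (phi u t0) t0 - angle (phi u t0) t).
Proof.
  intros ht ht0 Hm hm.
  rewrite (angle_phi u t0 ht0), <- (angle_phi u t ht).
  apply Rmult_le_reg_l with m; auto. rewrite <- Rmult_assoc, Rinv_r, Rmult_1_l by lra.
  destruct (Rle_dec (phi u t0) (phi u t)).
  - assert (H := angle_increase (phi u t) (phi u t0) t m ht Hm r).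
    rewrite !Rabs_right by nra. lra.
  - assert (H := angle_increase (phi u t0) (phi u t) t m ht Hm ltac:(lra)).
    rewrite !Rabs_left1 by nra. lra.
Qed.

Lemma phi_abs_le u t : 0 <= t -> 0 <= u <= 2 * PI -> Rabs (phi u t) <= Rabs (phi 0 t) + 2 * PI.
Proof.
  intros ht Hu. destruct (ellnu_lower_bound t ht) as [m [hm Hm]].
  destruct (phi_increase u 0 t m ht Hm hm ltac:(lra)) as [A _].
  destruct (phi_increase (2 * PI) u t m ht Hm hm ltac:(lra)) as [B _].
  rewrite <- (Rplus_0_l (2 * PI)) in B at 1. rewrite phi_periodic in B by auto.
  unfold Rabs; repeat destruct Rcase_abs; generalize PI_RGT_0; lra.
Qed.

Lemma phi_uniform_continuous_t t0 : 0 <= t0 -> forall eps, 0 < eps -> exists delta, 0 < delta /\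
  forall t, 0 <= t -> Rabs (t - t0) < delta -> forall u, Rabs (phi u t - phi u t0) < eps.
Proof.
  intros ht0 eps Heps.
  destruct (ellnu_local_lower_bound t0 ht0) as [m [d0 [hm [hd0 Hm]]]].
  set (B := Rabs (phi 0 t0) + 2 * PI).
  assert (HB : 0 < B) by (unfold B; generalize (Rabs_pos (phi 0 t0)) PI_RGT_0; lra).
  destruct (angle0_continuous t0 ht0 (eps * m / 2)) as [d1 [hd1 E1]]; [nra|].
  destruct (ellnu_uniform_continuous_t t0 ht0 (eps * m / (2 * B))) as [d2 [hd2 E2]];
    [apply Rdiv_lt_0_compat; nra|].
  exists (Rmin d0 (Rmin d1 d2)). split; [repeat apply Rmin_pos; auto|].
  intros t ht Htd.
  assert (M1 := Rmin_l d0 (Rmin d1 d2)). assert (M2 := Rmin_r d0 (Rmin d1 d2)).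
  assert (M3 := Rmin_l d1 d2). assert (M4 := Rmin_r d1 d2).
  assert (Hmt := Hm t ht ltac:(lra)).
  intros u.
  destruct (periodic_2PI_reduce (fun u => phi u t - phi u t0)) with (x := u) as [y [Hy ->]].
  { intros z. rewrite !phi_periodic by auto. ring. }
  eapply Rle_lt_trans; [apply (phi_close y t t0 m ht ht0 Hmt hm)|].
  set (x := phi y t0). assert (Hx : Rabs x <= B) by (apply phi_abs_le; auto).
  unfold angle.
  replace (angle0 t0 + ell_integral x t0 - (angle0 t + ell_integral x t))
    with (- (angle0 t - angle0 t0) - (ell_integral x t - ell_integral x t0)) by ring.
  assert (A1 := E1 t ht ltac:(lra)).
  assert (A2 : Rabs (ell_integral x t - ell_integral x t0) <= eps * m / 2).
  { eapply Rle_trans; [apply ell_integral_diff_bound; auto; intros s; left; apply E2; auto; lra|].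
    replace (eps * m / 2) with (B * (eps * m / (2 * B))) by (field; lra).
    apply Rmult_le_compat_r; auto. left; apply Rdiv_lt_0_compat; nra. }
  apply Rmult_lt_reg_l with m; auto. rewrite <- Rmult_assoc, Rinv_r, Rmult_1_l by lra.
  eapply Rle_lt_trans; [apply Rabs_triang|]. rewrite !Rabs_Ropp. lra.
Qed.

Lemma phi_continuity_2d u0 t0 : 0 < t0 -> continuity_2d_pt phi u0 t0.
Proof.
  intros ht0 eps. assert (He := cond_pos eps). assert (Hn := degree_pos).
  destruct (ellnu_local_lower_bound t0 ltac:(lra)) as [m [d0 [hm [hd0 Hm]]]].
  destruct (phi_uniform_continuous_t t0 ltac:(lra) (eps / 2)) as [d1 [hd1 E1]]; [lra|].
  set (d := Rmin (Rmin d0 d1) (Rmin t0 (eps / 2 * m / INR degree))).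
  assert (Hd : 0 < d) by (repeat apply Rmin_pos; auto; apply Rdiv_lt_0_compat; nra).
  exists (mkposreal _ Hd). simpl. intros u t Hu Ht.
  assert (M1 := Rmin_l (Rmin d0 d1) (Rmin t0 (eps / 2 * m / INR degree))).
  assert (M2 := Rmin_r (Rmin d0 d1) (Rmin t0 (eps / 2 * m / INR degree))).
  assert (M3 := Rmin_l d0 d1). assert (M4 := Rmin_r d0 d1).
  assert (M5 := Rmin_l t0 (eps / 2 * m / INR degree)).
  assert (M6 := Rmin_r t0 (eps / 2 * m / INR degree)). fold d in M1, M2.
  assert (ht : 0 <= t) by (apply Rabs_lt_between' in Ht; lra).
  replace (phi u t - phi u0 t0) with ((phi u t - phi u0 t) + (phi u0 t - phi u0 t0)) by ring.
  eapply Rle_lt_trans; [apply Rabs_triang|].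
  assert (A := phi_lipschitz u u0 t m ht (Hm t ht ltac:(lra)) hm).
  assert (INR degree / m * Rabs (u - u0) < eps / 2).
  { apply Rmult_lt_reg_l with (m / INR degree); [apply Rdiv_lt_0_compat; auto|].
    replace (m / INR degree * (INR degree / m * Rabs (u - u0))) with (Rabs (u - u0)) by (field; lra).
    replace (m / INR degree * (eps / 2)) with (eps / 2 * m / INR degree) by (field; lra). lra. }
  assert (B := E1 t ht ltac:(lra) u0). lra.
Qed.

Lemma phi_continuous2 u t : 0 < t -> continuous2 phi u t.
Proof. intros ht. apply (continuity_2d_pt_filterlim phi u t), phi_continuity_2d, ht. Qed.

Lemma phi_continuity_pt_t u t : 0 < t -> continuity_pt (fun s => phi u s) t.
Proof. intros ht. apply continuity_pt_filterlim, continuous2_t, phi_continuous2, ht. Qed.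

(* Differentiating [nu (phi u t) t = (sin (n u), - cos (n u))] in [t] through the
   scalar product with the constant vector [(cos (n u), sin (n u))]. *)
Lemma phi_derive_t u t : 0 < t ->
  derivable_pt_lim (fun s => phi u s) t (- omega (phi u t) t / ellnu (phi u t) t).
Proof.
  intros ht. set (C := cos (INR degree * u)). set (S := sin (INR degree * u)).
  set (e := RAdd (RMul (RAtom n1) (RConst C)) (RMul (RAtom n2) (RConst S))).
  assert (He : rexpr_smooth e) by (simpl; tauto).
  set (x := phi u t).
  assert (HK := smooth_pos_differentiable (reval e) x t (smooth_pos_reval _ He) ht).
  destruct (reval_derive e x t He ht) as [A [B _]].
  replace (Du (reval e) x t) with (reval (rexpr_deriv Du e) x t) in HK
    by (symmetry; apply is_derive_unique, A).
  replace (Dt (reval e) x t) with (reval (rexpr_deriv Dt e) x t) in HK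
    by (symmetry; apply is_derive_unique, B).
  simpl in HK.
  destruct (nu_phi u t ltac:(lra)) as [P1 P2]. fold x S C in P1, P2.
  destruct (Du_nu_decomp x t ltac:(lra)) as [D1 D2].
  assert (Z := sin2_cos2 (INR degree * u)). unfold Rsqr in Z. fold S C in Z.
  replace (Du n1 x t * C + n1 x t * 0 + (Du n2 x t * S + n2 x t * 0)) with (ellnu x t) in HK
    by (rewrite D1, D2, P1, P2; transitivity (ellnu x t * (S * S + C * C)); [rewrite Z|]; ring).
  replace (Dt n1 x t * C + n1 x t * 0 + (Dt n2 x t * S + n2 x t * 0)) with (omega x t) in HK
    by (unfold omega; rewrite P1, P2; ring).
  apply (implicit_derivable_pt_lim (reval e) (fun s => phi u s) t); auto.
  - apply Rgt_not_eq, ellnu_pos; lra.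
  - apply phi_continuity_pt_t, ht.
  - apply (filter_imp (fun s => 0 < s)); [|apply locally_gt0, ht].
    intros s hs. simpl. destruct (nu_phi u s ltac:(lra)) as [Q1 Q2].
    fold x. rewrite P1, P2, Q1, Q2. fold S C. ring.
Qed.

Lemma smooth_pos_fst : smooth_pos (fun x _ => x).
Proof.
  apply (smooth_pos_coind (fun h => h = (fun x _ => x) \/ exists c, h = fun _ _ => c))
    with (f := fun x _ => x); [| | |left; auto|intros ? ? ?; auto].
  - intros h [->|[c ->]] u t ht.
    + split; [|split].
      * exists 1. apply (is_derive_id (K := R_AbsRing)).
      * exists 0. apply (is_derive_const (K := R_AbsRing) (V := R_NormedModule)).
      * apply continuous_fst.
    + split; [|split].
      * exists 0. apply (is_derive_const (K := R_AbsRing) (V := R_NormedModule)).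
      * exists 0. apply (is_derive_const (K := R_AbsRing) (V := R_NormedModule)).
      * apply continuous_const.
  - intros h [->|[c ->]].
    + exists (fun _ _ => 1). split; [right; exists 1; auto|].
      intros u t _. unfold Du. rewrite Derive_id. auto.
    + exists (fun _ _ => 0). split; [right; exists 0; auto|].
      intros u t _. unfold Du. rewrite Derive_const. auto.
  - intros h Hh. exists (fun _ _ => 0). split; [right; exists 0; auto|].
    intros u t _. unfold Dt. destruct Hh as [->|[c ->]]; rewrite Derive_const; auto.
Qed.

Lemma phi_comp_derive_u G u t : smooth_pos G -> 0 < t ->
  derivable_pt_lim (fun s => G (phi s t) t) u (Du G (phi u t) t * (INR degree / ellnu (phi u t) t)).
Proof.
  intros HG ht. apply (derivable_pt_lim_comp (fun s => phi s t) (fun x => G x t)).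
  - apply phi_derive_u; lra.
  - apply is_derive_Reals, Derive_correct, (smooth_pos_regular G _ t HG ht).
Qed.

Lemma phi_comp_derive_t G u t : smooth_pos G -> 0 < t ->
  derivable_pt_lim (fun s => G (phi u s) s) t
    (Du G (phi u t) t * (- omega (phi u t) t / ellnu (phi u t) t) + Dt G (phi u t) t * 1).
Proof.
  intros HG ht. apply (derivable_pt_lim_comp_2d G (fun s => phi u s) (fun s => s)).
  - apply smooth_pos_differentiable; auto.
  - apply phi_derive_t, ht.
  - apply derivable_pt_lim_id.
Qed.

Lemma smooth_pos_phi : smooth_pos phi.
Proof.
  assert (Hne : forall u t, 0 < t -> reval (RAtom ellnu) u t <> 0).
  { intros u t ht. apply Rgt_not_eq, ellnu_pos. lra. }
  apply (smooth_pos_coind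
           (fun h => exists G, smooth_pos G /\ h = fun u t => G (phi u t) t)) with (f := phi);
    [| | |exists (fun x _ => x); split; [apply smooth_pos_fst|auto]|intros ? ? ?; auto].
  - intros h [G [HG ->]] u t ht. split; [|split].
    + eexists. apply is_derive_Reals, phi_comp_derive_u; auto.
    + eexists. apply is_derive_Reals, phi_comp_derive_t; auto.
    + apply (continuous_comp_2 (fun p : R * R => phi (fst p) (snd p)) (fun p : R * R => snd p) G).
      * apply phi_continuous2, ht.
      * apply continuous_snd.
      * apply (smooth_pos_regular G (phi u t) t HG ht).
  - intros h [G [HG ->]].
    set (e := RMul (RAtom (Du G)) (RMul (RConst (INR degree)) (RInv (RAtom ellnu)))).
    exists (fun u t => reval e (phi u t) t). split.
    + exists (reval e). split; auto. apply smooth_pos_reval.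
      simpl. auto using smooth_pos_Du, smooth_pos_ellnu.
    + intros u t ht. unfold Du at 1.
      rewrite (is_derive_unique _ _ _ (proj2 (is_derive_Reals _ _ _) (phi_comp_derive_u G u t HG ht))).
      unfold e. simpl. unfold Rdiv. ring.
  - intros h [G [HG ->]].
    set (e := RAdd (RMul (RAtom (Du G)) (RMul (RConst (-1)) (RMul (RAtom omega) (RInv (RAtom ellnu)))))
                   (RAtom (Dt G))).
    exists (fun u t => reval e (phi u t) t). split.
    + exists (reval e). split; auto. apply smooth_pos_reval.
      simpl. auto 6 using smooth_pos_Du, smooth_pos_Dt, smooth_pos_ellnu, smooth_pos_omega.
    + intros u t ht. unfold Dt at 1.
      rewrite (is_derive_unique _ _ _ (proj2 (is_derive_Reals _ _ _) (phi_comp_derive_t G u t HG ht))).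
      unfold e. simpl. unfold Rdiv. ring.
Qed.

Lemma phi_C1 t : 0 <= t -> Defs.C1 (fun u => phi u t).
Proof.
  intros ht. split.
  - intros u. eexists. apply is_derive_Reals, phi_derive_u, ht.
  - intros u. apply (continuous_ext (fun s => INR degree * / ellnu (phi s t) t));
      [intros s; rewrite Du_phi by auto; auto|].
    apply (continuous_mult (fun _ => INR degree) (fun s => / ellnu (phi s t) t));
      [apply continuous_const|].
    apply (continuous_comp (fun s => ellnu (phi s t) t) Rinv);
      [|apply continuous_Rinv, Rgt_not_eq, ellnu_pos, ht].
    apply (continuous_comp (fun s => phi s t) (fun x => ellnu x t)); [|apply ellnu_continuous, ht].
    apply (ex_derive_continuous (K := R_AbsRing) (V := R_NormedModule) (fun s => phi s t)).
    eexists. apply is_derive_Reals, phi_derive_u, ht.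
Qed.

Lemma ellnu_phi_continuous_t t0 : 0 <= t0 -> forall eps, 0 < eps -> exists delta, 0 < delta /\
  forall t, 0 <= t -> Rabs (t - t0) < delta ->
    forall u, Rabs (ellnu (phi u t) t - ellnu (phi u t0) t0) < eps.
Proof.
  intros ht0 eps Heps.
  set (B := Rabs (phi 0 t0) + 2 * PI). assert (He2 : 0 < eps / 2) by lra.
  destruct (Heine_cor2 (f := fun x => ellnu x t0) (a := - (B + 1)) (b := B + 1))
    with (eps := mkposreal _ He2) as [dH HdH];
    [intros x _; apply ellnu_continuity_pt, ht0|].
  simpl in HdH.
  destruct (phi_uniform_continuous_t t0 ht0 (Rmin 1 dH)) as [d1 [hd1 E1]];
    [apply Rmin_pos; [lra|apply cond_pos]|].
  destruct (ellnu_uniform_continuous_t t0 ht0 (eps / 2)) as [d2 [hd2 E2]]; [lra|].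
  exists (Rmin d1 d2). split; [apply Rmin_pos; auto|].
  intros t ht Htd. assert (M1 := Rmin_l d1 d2). assert (M2 := Rmin_r d1 d2).
  intros u.
  destruct (periodic_2PI_reduce (fun u => ellnu (phi u t) t - ellnu (phi u t0) t0))
    with (x := u) as [v [Hv ->]].
  { intros z. rewrite !phi_periodic, !ellnu_periodic by auto. auto. }
  set (x := phi v t0). set (y := phi v t).
  assert (Hx : Rabs x <= B) by (apply phi_abs_le; auto).
  assert (Hxy : Rabs (y - x) < Rmin 1 dH) by (apply E1; auto; lra).
  assert (N1 := Rmin_l 1 dH). assert (N2 := Rmin_r 1 dH).
  assert (A1 : Rabs (ellnu y t - ellnu y t0) < eps / 2) by (apply E2; auto; lra).
  assert (A2 : Rabs (ellnu y t0 - ellnu x t0) < eps / 2).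
  { apply Rabs_le_between in Hx. apply Rabs_lt_between' in Hxy.
    apply HdH; [lra|lra|]. apply Rabs_lt_between'. lra. }
  replace (ellnu y t - ellnu x t0) with ((ellnu y t - ellnu y t0) + (ellnu y t0 - ellnu x t0)) by ring.
  eapply Rle_lt_trans; [apply Rabs_triang|]. lra.
Qed.

Lemma phi_C0_C1 : C0_C1 phi.
Proof.
  split; [apply phi_C1|]. intros t0 ht0 eps Heps. assert (Hn := degree_pos).
  destruct (ellnu_local_lower_bound t0 ht0) as [m [d0 [hm [hd0 Hm]]]].
  destruct (phi_uniform_continuous_t t0 ht0 eps Heps) as [d1 [hd1 E1]].
  destruct (ellnu_phi_continuous_t t0 ht0 (eps * (m * m) / (2 * INR degree))) as [d2 [hd2 E2]].
  { apply Rdiv_lt_0_compat; [apply Rmult_lt_0_compat|]; nra. }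
  exists (Rmin d0 (Rmin d1 d2)). split; [repeat apply Rmin_pos; auto|].
  intros t ht Htd u.
  assert (M1 := Rmin_l d0 (Rmin d1 d2)). assert (M2 := Rmin_r d0 (Rmin d1 d2)).
  assert (M3 := Rmin_l d1 d2). assert (M4 := Rmin_r d1 d2).
  split; [apply E1; auto; lra|].
  rewrite !Du_phi by auto.
  eapply Rle_lt_trans.
  { apply (Rdiv_diff_abs_le (INR degree) _ _ m); try lra; apply Hm; auto;
      [lra|rewrite Rminus_eq_0, Rabs_R0; lra]. }
  assert (E := E2 t ht ltac:(lra) u).
  apply Rle_lt_trans with (INR degree / (m * m) * (eps * (m * m) / (2 * INR degree))).
  - apply Rmult_le_compat_l; [apply Rdiv_le_0_compat; nra|lra].
  - replace (INR degree / (m * m) * (eps * (m * m) / (2 * INR degree))) with (eps / 2)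
      by (field; split; lra).
    lra.
Qed.

Lemma ellnu0_holder alpha : 0 < alpha <= 1 ->
  C1alpha alpha (fun u => n1 u 0) -> C1alpha alpha (fun u => n2 u 0) ->
  exists C, 0 <= C /\
    forall x y, x <> y -> Rabs (ellnu x 0 - ellnu y 0) <= C * Rpower (Rabs (x - y)) alpha.
Proof.
  intros Ha [_ [C1 H1]] [_ [C2 H2]].
  assert (HC1 := holder_const_nonneg _ _ _ H1). assert (HC2 := holder_const_nonneg _ _ _ H2).
  destruct (ellnu_upper_bound 0 (Rle_refl 0)) as [M HM].
  assert (HM0 : 0 <= M) by (generalize (ellnu_pos 0 0 (Rle_refl 0)) (HM 0); lra).
  assert (L : forall f, (f = n1 \/ f = n2) -> forall x y, x <> y ->
            Rabs (f x 0 - f y 0) <= (M + 2) * Rpower (Rabs (x - y)) alpha).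
  { intros f Hf. apply (holder_of_lipschitz_bounded (fun x => f x 0)); auto.
    - apply lipschitz_of_derive_bound.
      + intros; destruct Hf as [->| ->]; [apply n1_ex_derive|apply n2_ex_derive]; lra.
      + intros x. destruct Hf as [->| ->];
          [apply (Du_n1_abs_le x 0)|apply (Du_n2_abs_le x 0)]; auto; lra.
    - intros x y. assert (Hb : forall z, Rabs (f z 0) <= 1).
      { intros z. destruct Hf as [->| ->]; [apply n1_abs_le1|apply n2_abs_le1]; lra. }
      eapply Rle_trans; [apply Rabs_triang|]. rewrite Rabs_Ropp.
      generalize (Hb x) (Hb y). lra. }
  exists (C1 + C2 + 2 * M * (M + 2)). split; [nra|].
  intros x y Hxy. set (p := Rpower (Rabs (x - y)) alpha). assert (Hp := Rpower_pos (Rabs (x - y)) alpha).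
  eapply Rle_trans; [apply (ellnu_diff_bound x 0 y 0 M); auto; lra|].
  assert (K1 := H1 x y Hxy). assert (K2 := H2 x y Hxy).
  assert (L1 := L n1 (or_introl eq_refl) x y Hxy). assert (L2 := L n2 (or_intror eq_refl) x y Hxy).
  fold p in K1, K2, L1, L2.
  assert (M * (Rabs (n1 x 0 - n1 y 0) + Rabs (n2 x 0 - n2 y 0)) <= M * (2 * (M + 2) * p))
    by (apply Rmult_le_compat_l; lra).
  unfold Du. nra.
Qed.

Lemma phi0_holder alpha : 0 < alpha < 1 ->
  C1alpha alpha (fun u => n1 u 0) -> C1alpha alpha (fun u => n2 u 0) ->
  C1alpha alpha (fun u => phi u 0).
Proof.
  intros Ha Hn1 Hn2. split; [apply phi_C1; lra|].
  destruct (ellnu0_holder alpha ltac:(lra) Hn1 Hn2) as [C [HC Hl]].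
  destruct (ellnu_lower_bound 0 (Rle_refl 0)) as [m [hm Hm]].
  assert (Hn := degree_pos).
  exists (INR degree / (m * m) * C * Rpower (INR degree / m) alpha).
  intros u v Huv. rewrite !Du_phi by lra.
  set (a := phi u 0). set (b := phi v 0).
  assert (Hab : a <> b).
  { intros E. apply Huv. apply Rmult_eq_reg_l with (INR degree); [|lra].
    rewrite <- (angle_phi u 0), <- (angle_phi v 0) by lra. fold a b. rewrite E. auto. }
  assert (Hlip : Rabs (a - b) <= INR degree / m * Rabs (u - v)) by (apply phi_lipschitz; auto; lra).
  assert (Hpw : Rpower (Rabs (a - b)) alpha <= Rpower (INR degree / m) alpha * Rpower (Rabs (u - v)) alpha).
  { rewrite Rpower_mult_distr; [|apply Rdiv_lt_0_compat; auto|apply Rabs_pos_lt; lra].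
    apply Rle_Rpower_l; [lra|]. split; auto. apply Rabs_pos_lt; lra. }
  eapply Rle_trans; [apply (Rdiv_diff_abs_le (INR degree) _ _ m); auto; lra|].
  assert (Hf : 0 <= INR degree / (m * m)) by (apply Rdiv_le_0_compat; nra).
  eapply Rle_trans; [apply Rmult_le_compat_l; [exact Hf|apply (Hl a b Hab)]|].
  rewrite !Rmult_assoc. apply Rmult_le_compat_l; [exact Hf|]. apply Rmult_le_compat_l; auto.
Qed.

Lemma Du_comp_phi G u t : smooth_pos G -> 0 < t ->
  Derive (fun s => G (phi s t) t) u = Du G (phi u t) t * (INR degree / ellnu (phi u t) t).
Proof. intros HG ht. apply is_derive_unique, is_derive_Reals, phi_comp_derive_u; auto. Qed.

Lemma Dt_comp_phi G u t : smooth_pos G -> 0 < t ->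
  Derive (fun s => G (phi u s) s) t =
    Du G (phi u t) t * (- omega (phi u t) t / ellnu (phi u t) t) + Dt G (phi u t) t.
Proof.
  intros HG ht. rewrite <- (Rmult_1_r (Dt G (phi u t) t)).
  apply is_derive_unique, is_derive_Reals, phi_comp_derive_t; auto.
Qed.

(** * The reparametrized flow *)

Variable X : R -> R -> R * R.

Definition X1 u t := fst (X u t).
Definition X2 u t := snd (X u t).
Definition betaX u t := Du X1 u t * - n2 u t + Du X2 u t * n1 u t.
Definition tangX u t := Dt X1 u t * - n2 u t + Dt X2 u t * n1 u t.

Hypothesis X1_smooth : smooth_pos X1.
Hypothesis X2_smooth : smooth_pos X2.
Hypothesis legendre : forall u t, 0 < t -> Du X1 u t * n1 u t + Du X2 u t * n2 u t = 0.
Hypothesis normal_velocity : forall u t, 0 < t ->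
  Dt X1 u t * n1 u t + Dt X2 u t * n2 u t = betaX u t / ellnu u t.

Local Notation N := (INR degree).

Lemma smooth_pos_betaX : smooth_pos betaX.
Proof.
  apply (smooth_pos_ext (reval (RAdd (RMul (RAtom (Du X1)) (RMul (RConst (-1)) (RAtom (n2))))
                                     (RMul (RAtom (Du X2)) (RAtom (n1)))))).
  - apply smooth_pos_reval. simpl. auto using smooth_pos_Du.
  - intros u t _. simpl. unfold betaX. ring.
Qed.

Lemma legendre_Dt x t : 0 < t ->
  Dt (Du X1) x t * n1 x t + Du X1 x t * Dt (n1) x t
  + (Dt (Du X2) x t * n2 x t + Du X2 x t * Dt (n2) x t) = 0.
Proof.
  intros ht.
  assert (D : is_derive (fun s => Du X1 x s * n1 x s + Du X2 x s * n2 x s) t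
    (Dt (Du X1) x t * n1 x t + Du X1 x t * Dt (n1) x t
     + (Dt (Du X2) x t * n2 x t + Du X2 x t * Dt (n2) x t))).
  { apply (is_derive_plus (fun s => Du X1 x s * n1 x s) (fun s => Du X2 x s * n2 x s));
      [apply (is_derive_mult (fun s => Du X1 x s) (fun s => n1 x s))
      |apply (is_derive_mult (fun s => Du X2 x s) (fun s => n2 x s))];
      auto using Rmult_comm; apply Derive_correct.
    - apply (smooth_pos_regular (Du X1) x t (smooth_pos_Du _ X1_smooth) ht).
    - apply (smooth_pos_regular (n1) x t n1_smooth ht).
    - apply (smooth_pos_regular (Du X2) x t (smooth_pos_Du _ X2_smooth) ht).
    - apply (smooth_pos_regular (n2) x t n2_smooth ht). }
  rewrite <- (is_derive_unique _ _ _ D).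
  rewrite (Derive_ext_loc _ (fun _ => 0)); [apply Derive_const|].
  apply (filter_imp (fun s => 0 < s)); [|apply locally_gt0, ht].
  intros s hs. apply legendre, hs.
Qed.

Lemma normal_velocity_Du x t : 0 < t ->
  Du (Dt X1) x t * n1 x t + Dt X1 x t * Du (n1) x t
  + (Du (Dt X2) x t * n2 x t + Dt X2 x t * Du (n2) x t)
  = Derive (fun a => betaX a t / ellnu a t) x.
Proof.
  intros ht.
  assert (D : is_derive (fun a => Dt X1 a t * n1 a t + Dt X2 a t * n2 a t) x
    (Du (Dt X1) x t * n1 x t + Dt X1 x t * Du (n1) x t
     + (Du (Dt X2) x t * n2 x t + Dt X2 x t * Du (n2) x t))).
  { apply (is_derive_plus (fun a => Dt X1 a t * n1 a t) (fun a => Dt X2 a t * n2 a t));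
      [apply (is_derive_mult (fun a => Dt X1 a t) (fun a => n1 a t))
      |apply (is_derive_mult (fun a => Dt X2 a t) (fun a => n2 a t))];
      auto using Rmult_comm; apply Derive_correct.
    - apply (smooth_pos_regular (Dt X1) x t (smooth_pos_Dt _ X1_smooth) ht).
    - apply (smooth_pos_regular (n1) x t n1_smooth ht).
    - apply (smooth_pos_regular (Dt X2) x t (smooth_pos_Dt _ X2_smooth) ht).
    - apply (smooth_pos_regular (n2) x t n2_smooth ht). }
  rewrite <- (is_derive_unique _ _ _ D). apply Derive_ext. intros a. apply normal_velocity, ht.
Qed.

(* Comparing the time derivative of the Legendre condition with the space
   derivative of the normal velocity [beta / ell] (Schwarz). *)
Lemma beta_omega_identity x t : 0 < t ->
  betaX x t * omega x t = tangX x t * ellnu x t - Derive (fun a => betaX a t / ellnu a t) x.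
Proof.
  intros ht.
  assert (I1 := legendre_Dt x t ht). rewrite <- (normal_velocity_Du x t ht).
  rewrite (smooth_pos_Du_Dt X1 x t X1_smooth ht), (smooth_pos_Du_Dt X2 x t X2_smooth ht).
  destruct (Du_nu_decomp x t ltac:(lra)) as [D1 D2].
  destruct (Dt_nu_decomp x t ht) as [T1 T2].
  destruct (unit_orth_decomp (n1 x t) (n2 x t) (Du X1 x t) (Du X2 x t)) as [V1 V2];
    [apply nu_unit; lra|apply legendre, ht|].
  fold (betaX x t) in V1, V2. rewrite V1, V2, T1, T2 in I1. rewrite D1, D2.
  assert (U := nu_unit x t ltac:(lra)).
  transitivity (betaX x t * omega x t * (n1 x t * n1 x t + n2 x t * n2 x t));
    [rewrite U; ring|].
  unfold tangX. lra.
Qed.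

Lemma nu_phi_explicit s t : 0 <= t -> nu (phi s t) t = (sin (N * s), - cos (N * s)).
Proof.
  intros ht. destruct (nu_phi s t ht) as [A B].
  unfold n1, n2 in A, B. rewrite (surjective_pairing (nu (phi s t) t)), A, B. auto.
Qed.

Lemma ell_reparam u t : 0 <= t ->
  ell (fun u t => X (phi u t) t) (fun u t => nu (phi u t) t) u t = N.
Proof.
  intros ht. unfold ell, du, dot, Jrot.
  rewrite !(Derive_ext (fun s => _ (nu (phi s t) t))
                       (fun s => _ (sin (N * s), - cos (N * s))))
    by (intros; rewrite nu_phi_explicit; auto).
  rewrite nu_phi_explicit by auto. simpl.
  assert (E1 : Derive (fun s : R => sin (N * s)) u = N * cos (N * u))
    by (apply is_derive_unique; auto_derive; auto; ring).
  assert (E2 : Derive (fun s : R => - cos (N * s)) u = N * sin (N * u))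
    by (apply is_derive_unique; auto_derive; auto; ring).
  rewrite E1, E2.
  transitivity (N * (sin (N * u) * sin (N * u) + cos (N * u) * cos (N * u))); [ring|].
  assert (Z := sin2_cos2 (N * u)). unfold Rsqr in Z. rewrite Z. ring.
Qed.

Lemma beta_reparam s t : 0 < t ->
  beta (fun u t => X (phi u t) t) (fun u t => nu (phi u t) t) s t
  = N * (betaX (phi s t) t / ellnu (phi s t) t).
Proof.
  intros ht. unfold beta, du, dot, Jrot. simpl.
  change (fun r => fst (X (phi r t) t)) with (fun r => X1 (phi r t) t).
  change (fun r => snd (X (phi r t) t)) with (fun r => X2 (phi r t) t).
  rewrite (Du_comp_phi X1), (Du_comp_phi X2) by auto.
  unfold betaX, n1, n2. field. apply Rgt_not_eq, ellnu_pos. lra.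
Qed.

Lemma Du_beta_reparam u t : 0 < t ->
  Derive (fun s => beta (fun u t => X (phi u t) t) (fun u t => nu (phi u t) t) s t) u
  = N * Derive (fun a => betaX a t / ellnu a t) (phi u t) * (N / ellnu (phi u t) t).
Proof.
  intros ht. set (G := fun a t => N * (betaX a t / ellnu a t)).
  assert (HG : smooth_pos G).
  { apply (smooth_pos_ext (reval (RMul (RConst N) (RMul (RAtom betaX) (RInv (RAtom (ellnu))))))).
    - apply smooth_pos_reval. simpl. split; [auto|split; [apply smooth_pos_betaX|split]].
      + apply smooth_pos_ellnu; auto.
      + intros a b hb. apply Rgt_not_eq, ellnu_pos. lra.
    - intros a b _. reflexivity. }
  rewrite (Derive_ext _ (fun s => G (phi s t) t)) by (intros; apply beta_reparam, ht).
  rewrite Du_comp_phi by auto. unfold Du, G. rewrite Derive_scal. auto.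
Qed.

Lemma dt_reparam u t : 0 < t ->
  let x := phi u t in
  dt (fun u t => X (phi u t) t) u t =
    (Du X1 x t * (- omega x t / ellnu x t) + Dt X1 x t,
     Du X2 x t * (- omega x t / ellnu x t) + Dt X2 x t).
Proof.
  intros ht x. unfold dt.
  change (fun s => fst (X (phi u s) s)) with (fun s => X1 (phi u s) s).
  change (fun s => snd (X (phi u s) s)) with (fun s => X2 (phi u s) s).
  rewrite !Dt_comp_phi by auto. auto.
Qed.

(* Whatever the tangential velocity [tangX], the reparametrized flow has tangential
   velocity [Du beta / ell^2]: that is [beta_omega_identity] in the new frame. *)
Lemma reparametrized_flow u t : 0 < t ->
  let Xt := fun u t => X (phi u t) t in
  let nut := fun u t => nu (phi u t) t in
  dt Xt u t =
    vadd (vscal (beta Xt nut u t / ell Xt nut u t) (nut u t))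
         (vscal (Derive (fun s => beta Xt nut s t) u / (ell Xt nut u t) ^ 2) (Jrot (nut u t))).
Proof.
  intros ht Xt nut. unfold Xt, nut.
  rewrite dt_reparam, ell_reparam, beta_reparam, Du_beta_reparam by lra.
  set (x := phi u t).
  assert (HN : 0 < N) by (apply degree_pos).
  assert (HL : 0 < ellnu x t) by (apply ellnu_pos; lra).
  assert (Om := beta_omega_identity x t ht).
  destruct (unit_orth_decomp (n1 x t) (n2 x t) (Du X1 x t) (Du X2 x t)) as [V1 V2];
    [apply nu_unit; lra|apply legendre, ht|].
  destruct (unit_frame_decomp (n1 x t) (n2 x t) (Dt X1 x t) (Dt X2 x t)) as [W1 W2];
    [apply nu_unit; lra|].
  rewrite normal_velocity in W1, W2 by auto.
  fold (betaX x t) in V1, V2. fold (tangX x t) in W1, W2.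
  unfold vadd, vscal, Jrot. fold x.
  rewrite (surjective_pairing (nu x t)). change (fst (nu x t)) with (n1 x t).
  change (snd (nu x t)) with (n2 x t). simpl.
  rewrite V1, V2, W1, W2. f_equal.
  - transitivity (n1 x t * (betaX x t / ellnu x t)
      + n2 x t * (betaX x t * omega x t - tangX x t * ellnu x t) / ellnu x t);
      [field; lra|].
    rewrite Om. field. lra.
  - transitivity (n2 x t * (betaX x t / ellnu x t)
      - n1 x t * (betaX x t * omega x t - tangX x t * ellnu x t) / ellnu x t);
      [field; lra|].
    rewrite Om. field. lra.
Qed.

End NormalAngle.

Theorem proposition3p2 (alpha : R) (F : R -> R -> R)
  (X nu : R -> R -> R * R) (X0 nu0 : R -> R * R) :
  0 < alpha < 1 ->
  periodic2 F -> smooth_pos F ->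
  flow_regular X nu ->
  (forall u, X u 0 = X0 u /\ nu u 0 = nu0 u) ->
  C1alphaV alpha X0 -> C1alphaV alpha nu0 ->
  (forall u, 0 < ell X nu u 0) ->
  inverse_curvature_flow X nu ->
  (forall u t, 0 < t ->
     tang_vel X nu u t =
       Derive (fun s => beta X nu s t) u / (ell X nu u t) ^ 2
       + F u t * beta X nu u t) ->
  exists (n : nat) (phi : R -> R -> R) (d : R),
    (d = 1 \/ d = -1) /\
    (* phi(.,t) lifts a map of S^1_{2pi} of degree d = +-1 *)
    (forall u t, 0 <= t -> phi (u + 2 * PI) t = phi u t + 2 * PI * d) /\
    C0_C1 phi /\ smooth_pos phi /\
    (* each phi(.,t) is a diffeomorphism of S^1_{2pi} *)
    (forall u t, 0 <= t -> Derive (fun s => phi s t) u <> 0) /\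
    C1alpha alpha (fun u => phi u 0) /\
    let Xt := fun u t => X (phi u t) t in
    let nut := fun u t => nu (phi u t) t in
    (forall u, nut u 0 = (sin (INR n * u), - cos (INR n * u))) /\
    (forall u t, 0 < t ->
       dt Xt u t =
         vadd (vscal (beta Xt nut u t / ell Xt nut u t) (nut u t))
              (vscal (Derive (fun s => beta Xt nut s t) u / (ell Xt nut u t) ^ 2)
                     (Jrot (nut u t)))).
Proof.
  intros Ha _ _ [_ [Hper [_ [[HC1 HC2] [[HX1 HX2] [HS1 HS2]]]]]] H0 _ Hnu0 Hell0
    [Hleg [Hellp HN]] _.
  assert (Hunit : forall u t, 0 <= t -> n1 nu u t * n1 nu u t + n2 nu u t * n2 nu u t = 1)
    by (intros u t ht; apply (Hleg u t ht)).
  assert (Hpos : forall u t, 0 <= t -> 0 < ellnu nu u t).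
  { intros u t ht. destruct (Req_dec t 0) as [->|]; [apply Hell0|apply Hellp; lra]. }
  assert (Hnu0' : C1alpha alpha (fun u => n1 nu u 0) /\ C1alpha alpha (fun u => n2 nu u 0)).
  { assert (E : forall f : R * R -> R, (fun u => f (nu u 0)) = (fun u => f (nu0 u)))
      by (intros f; apply functional_extensionality; intros u; rewrite (proj2 (H0 u)); auto).
    unfold n1, n2. rewrite (E fst), (E snd). exact Hnu0. }
  exists (degree nu), (phi nu), 1.
  split; [left; reflexivity|].
  split; [intros u t ht; rewrite Rmult_1_r; apply phi_periodic; auto|].
  split; [apply phi_C0_C1; auto|].
  split; [apply smooth_pos_phi; auto|].
  split; [intros u t ht; rewrite Du_phi; auto; apply Rgt_not_eq, Rdiv_lt_0_compat;
          [apply degree_pos|apply Hpos]; auto|].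
  split; [apply phi0_holder; tauto|].
  split; [intros u; apply nu_phi_explicit; auto; lra|].
  intros u t ht. apply reparametrized_flow; auto. intros a b hb. apply (Hleg a b); lra.
Qed.
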